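(* Let $H(x)=1-\log(2-x)$ and, for $n\ge1$, $H_n(x)=1+(H(x)-1)/n$. Consider $X_0=0$, $X_n=\sum_{j=1}^{X_{n-1}}\xi_{n,j}+\varepsilon_n$, with $\{\xi_{n,j},\varepsilon_n\}$ independent nonnegative integer-valued, $\xi_{n,j}$ identically distributed in $j$ with generating function $G_n$ satisfying $G_n'(1)=\rho_n=1-1/n$ and $\lim_{n\to\infty}G_n''(1)\,n=0$, and $\varepsilon_n$ with generating function $H_n$. Then $H_n$ is a probability generating function, $\lim_{n}\frac{H_n^{(k)}(1)}{k(1-\rho_n)}=\frac{(k-1)!}{k}$ for every $k\ge1$, and $X_n$ converges in distribution to the compound Poisson distribution $\mathrm{CP}(\mu)$ with $$\mu\{j\}=\frac1j\Big[\log 2-\sum_{k=1}^{j-1}\frac{1}{k2^k}\Big],\qquad j\ge1;$$ equivalently, for $x\in(0,1)$, $\sum_{l=1}^\infty\frac{(x-1)^l}{l^2}=\sum_{j=1}^\infty\mu\{j\}(x^j-1)$.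
   Context: For a finite measure $\mu$ on $\{1,2,\dots\}$, $\mathrm{CP}(\mu)$ is the distribution with generating function $\exp\{\sum_{j\ge1}\mu\{j\}(x^j-1)\}$, $x\in[0,1]$. *)

From Stdlib Require Import Reals Arith Factorial.
Open Scope R_scope.

Definition H (x : R) : R := 1 - ln (2 - x).
Definition Hn (n : nat) (x : R) : R := 1 + (H x - 1) / INR n.

Definition rho (n : nat) : R := 1 - / INR n.

Definition is_pmf (p : nat -> R) : Prop :=
  (forall k, 0 <= p k) /\ infinite_sum p 1.

Definition has_pgf (p : nat -> R) (G : R -> R) : Prop :=
  forall x, 0 <= x <= 1 -> infinite_sum (fun k => p k * x ^ k) (G x).

Definition is_pgf (G : R -> R) : Prop :=
  exists p, is_pmf p /\ has_pgf p G.

Fixpoint csum (f : nat -> R) (n : nat) : R :=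
  match n with O => f O | S m => csum f m + f (S m) end.
Definition conv (p q : nat -> R) (k : nat) : R :=
  csum (fun i => p i * q (k - i)%nat) k.
Definition delta0 (k : nat) : R := match k with O => 1 | _ => 0 end.
Fixpoint convpow (p : nat -> R) (m : nat) : nat -> R :=
  match m with O => delta0 | S m' => conv p (convpow p m') end.

(* L is the sequence of laws of X_n: X_0 = 0 and
   X_n = sum_{j=1}^{X_{n-1}} xi_{n,j} + eps_n  (all independent),
   with xi_{n,.} of law g n and eps_n of law e n. *)
Definition bpi_laws (g e L : nat -> nat -> R) : Prop :=
  L O = delta0 /\
  forall n k, (1 <= n)%nat ->
    infinite_sum (fun m => L (n - 1)%nat m * conv (convpow (g n) m) (e n) k) (L n k).

Inductive nth_deriv (D : R -> Prop) : nat -> (R -> R) -> (R -> R) -> Prop :=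
| nth_deriv0 f : nth_deriv D O f f
| nth_derivS k f f' g :
    (forall x, D x -> derivable_pt_lim f x (f' x)) ->
    nth_deriv D k f' g -> nth_deriv D (S k) f g.

(* partial sum  sum_{k=1}^{j-1} 1/(k 2^k) *)
Fixpoint psum (j : nat) : R :=
  match j with
  | O => 0
  | S j' => psum j' + match j' with O => 0 | _ => / (INR j' * 2 ^ j') end
  end.

Definition mu (j : nat) : R := / INR j * (ln 2 - psum j).

Definition is_CP_mu (q : nat -> R) : Prop :=
  is_pmf q /\
  forall x, 0 <= x <= 1 ->
    exists s0, infinite_sum (fun j => mu (S j) * (x ^ (S j) - 1)) s0 /\
              infinite_sum (fun k => q k * x ^ k) (exp s0).

Definition conv_dist (L : nat -> nat -> R) (q : nat -> R) : Prop :=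
  forall k, Un_cv (fun n => L n k) (q k).

(* Proof outline.
   (1) H_n(x) = (1 - ln 2/n) + (1/n) sum_{k>=1} x^k/(k 2^k), so H_n is the generating
       function of an explicit probability mass function.
   (2) H_n^(k)(x) = (k-1)!/(n (2-x)^k), so H_n^(k)(1)/(k(1-rho_n)) is constantly (k-1)!/k.
   (4) j mu{j} is the tail sum_{k>=j} 1/(k 2^k) of the series of ln 2; hence the derivative
       of M(x) = sum_j mu{j} x^j is ln(2-x)/(1-x), which is also the derivative of
       A(x) = sum_l (x-1)^l/l^2.  As A(1) = 0, A(x) = M(x) - M(1) on (0,1).
   (3) The generating function of X_n satisfies P_n(x) = P_{n-1}(G_n(x)) H_n(x), so
       ln P_n(x) = sum_{k<=n} ln H_k(Phi_{k,n}(x)) with Phi_{k,n} = G_{k+1} o ... o G_n.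
       From rho_j-linear bounds on G_j, 1 - Phi_{k,n}(x) ~ (1-x) k/n, and ln P_n(x) differs
       from -T_n(1-x) = -sum_{k<=n} ln(1 + (1-x)k/n)/k by O(1/n) plus an error governed by
       n G_n''(1) -> 0.  Expanding the logarithm and using Tannery's theorem on the Riemann
       sums (1/n) sum_k (k/n)^(l-1) -> 1/l gives T_n(1-x) -> -A(x).  So P_n(x) tends to
       exp(M(x) - M(1)), the generating function of the compound Poisson law built as a
       Poisson mixture of convolution powers of mu, and a continuity theorem for generating
       functions on (0,1) yields convergence of the probability mass functions. *)

From Stdlib Require Import Reals Arith Factorial Lra Lia.
From Coquelicot Require Import Coquelicot.
Open Scope R_scope.

(* Closes equalities in R stated through Coquelicot's structure projections. *)
Ltac rring := match goal with |- ?a = ?b => change (@eq R a b) end; ring.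

(** * Series with nonnegative terms *)

Lemma partial_sum_le_series (a : nat -> R) l : (forall n, 0 <= a n) -> is_series a l ->
  forall N, sum_f_R0 a N <= l.
Proof.
  intros Ha Hl N. apply is_series_Reals in Hl.
  apply (growing_ineq (fun N => sum_f_R0 a N)); auto.
  intro n. simpl. specialize (Ha (S n)). lra.
Qed.

Lemma term_le_series (a : nat -> R) l : (forall n, 0 <= a n) -> is_series a l ->
  forall n, a n <= l.
Proof.
  intros Ha Hl n. apply Rle_trans with (sum_f_R0 a n).
  - destruct n; simpl; [lra|]. assert (0 <= sum_f_R0 a n) by (apply cond_pos_sum; auto). lra.
  - apply partial_sum_le_series; auto.
Qed.

Lemma series_nonneg (a : nat -> R) l : (forall n, 0 <= a n) -> is_series a l -> 0 <= l.
Proof. intros Ha Hl. apply Rle_trans with (a O); auto. apply term_le_series; auto. Qed.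

Lemma series_le_of_partial_bound (a : nat -> R) l M : is_series a l ->
  (forall N, sum_f_R0 a N <= M) -> l <= M.
Proof.
  intros Hl HM. apply is_series_Reals, is_lim_seq_Reals in Hl.
  apply (is_lim_seq_le (fun N => sum_f_R0 a N) (fun _ => M) l M); auto.
  apply is_lim_seq_const.
Qed.

Lemma ex_series_of_bounded_partial (a : nat -> R) M : (forall n, 0 <= a n) ->
  (forall N, sum_f_R0 a N <= M) -> ex_series a.
Proof.
  intros Ha HM.
  destruct (Un_cv_crit (fun N => sum_f_R0 a N)) as [l Hl].
  - intro n. simpl. specialize (Ha (S n)). lra.
  - exists M. intros x [n ->]. auto.
  - exists l; apply is_series_Reals; auto.
Qed.

Lemma series_le (a b : nat -> R) la lb : (forall n, 0 <= a n <= b n) ->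
  is_series a la -> is_series b lb -> la <= lb.
Proof.
  intros Hab Ha Hb. rewrite <- (is_series_unique _ _ Ha), <- (is_series_unique _ _ Hb).
  apply Series_le; auto. exists lb; auto.
Qed.

Lemma is_series_of_const_partial (a : nat -> R) l : (forall N, sum_f_R0 a N = l) -> is_series a l.
Proof.
  intro H. apply is_series_Reals. intros e He. exists O. intros n _.
  rewrite H. unfold R_dist. rewrite Rminus_diag_eq, Rabs_R0; auto.
Qed.

Lemma is_series_limit_unique (a : nat -> R) l1 l2 : is_series a l1 -> is_series a l2 -> l1 = l2.
Proof. intros H1 H2. rewrite <- (is_series_unique _ _ H1). apply is_series_unique; auto. Qed.

Lemma is_series_shift (a : nat -> R) l : is_series a l -> a O = 0 -> is_series (fun k => a (S k)) l.
Proof.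
  intros H H0. apply is_series_incr_1. replace (plus l (a O)) with l; auto.
  rewrite H0. apply eq_sym, Rplus_0_r.
Qed.

Lemma Series_finite_sum (a : nat -> nat -> R) K :
  (forall k, ex_series (fun m => a m k)) ->
  Series (fun m => sum_f_R0 (a m) K) = sum_f_R0 (fun k => Series (fun m => a m k)) K.
Proof.
  intros Hex. induction K; simpl; [reflexivity|].
  rewrite Series_plus, IHK; [reflexivity| |apply Hex].
  clear IHK. induction K; simpl; [apply Hex|].
  apply (ex_series_plus (V:=R_NormedModule)); auto.
Qed.

Lemma tonelli (a : nat -> nat -> R) (A : nat -> R) S :
  (forall m k, 0 <= a m k) -> (forall m, is_series (a m) (A m)) -> is_series A S ->
  (forall k, ex_series (fun m => a m k)) /\
  is_series (fun k => Series (fun m => a m k)) S.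
Proof.
  intros Ha HA HS.
  assert (HA0 : forall m, 0 <= A m) by (intro m; apply (series_nonneg (a m)); auto).
  assert (Hcol : forall k, ex_series (fun m => a m k)).
  { intro k. apply (ex_series_le (V:=R_CompleteNormedModule)) with A.
    - intro m. rewrite Rabs_pos_eq; auto. apply term_le_series; auto.
    - exists S; auto. }
  split; auto.
  set (B := fun k => Series (fun m => a m k)).
  assert (HB0 : forall k, 0 <= B k).
  { intro k. apply (series_nonneg (fun m => a m k)); auto. apply Series_correct; auto. }
  assert (Hpart : forall K, sum_f_R0 B K <= S).
  { intro K. unfold B. rewrite <- Series_finite_sum, <- (is_series_unique A S HS); auto.
    apply Series_le; [|exists S; auto]. intro m. split.
    - apply cond_pos_sum; auto.
    - apply partial_sum_le_series; auto. }
  assert (HexB : ex_series B) by (apply (ex_series_of_bounded_partial B S); auto).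
  assert (HSB : Series B <= S) by (apply (series_le_of_partial_bound B); auto; apply Series_correct; auto).
  assert (HBS : S <= Series B).
  { apply (series_le_of_partial_bound A); auto. intro M.
    assert (E : sum_f_R0 A M = Series (fun k => sum_f_R0 (fun m => a m k) M)).
    { rewrite (Series_finite_sum (fun k m => a m k) M).
      - apply sum_eq. intros. symmetry. apply is_series_unique. auto.
      - intro k. exists (A k). auto. }
    rewrite E. apply Series_le; auto. intro k. split.
    - apply cond_pos_sum; auto.
    - apply (partial_sum_le_series (fun m => a m k)); auto. apply Series_correct; auto. }
  replace S with (Series B) by lra. apply Series_correct; auto.
Qed.

(** * Convolutions and their generating functions *)

Lemma csum_sum f n : csum f n = sum_f_R0 f n.
Proof. induction n; simpl; [reflexivity|rewrite IHn; reflexivity]. Qed.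

Lemma delta0_pgf x : is_series (fun k => delta0 k * x ^ k) 1.
Proof.
  apply is_series_of_const_partial. induction N; simpl; [ring|]. rewrite IHN. ring.
Qed.

Lemma conv_nonneg p q : (forall k, 0 <= p k) -> (forall k, 0 <= q k) -> forall k, 0 <= conv p q k.
Proof.
  intros. unfold conv. rewrite csum_sum. apply cond_pos_sum. intro. apply Rmult_le_pos; auto.
Qed.

Lemma convpow_nonneg p : (forall k, 0 <= p k) -> forall m k, 0 <= convpow p m k.
Proof.
  intros Hp m. induction m; simpl; intros.
  - destruct k; simpl; lra.
  - apply conv_nonneg; auto.
Qed.

Lemma sum_mult_r (f : nat -> R) c N : sum_f_R0 f N * c = sum_f_R0 (fun i => f i * c) N.
Proof. induction N; simpl; [ring| rewrite <- IHN; ring]. Qed.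

(* The generating function of a convolution is the product (Cauchy product of
   nonnegative series). *)
Lemma conv_pgf p q P Q x : (forall k, 0 <= p k) -> (forall k, 0 <= q k) -> 0 <= x ->
  is_series (fun k => p k * x ^ k) P -> is_series (fun k => q k * x ^ k) Q ->
  is_series (fun k => conv p q k * x ^ k) (P * Q).
Proof.
  intros Hp Hq Hx HP HQ.
  eapply is_series_ext; [|apply (is_series_mult_pos _ _ _ _ HP HQ)].
  - intro n. symmetry. unfold conv. rewrite csum_sum, sum_mult_r. apply sum_eq.
    intros i Hi. assert (E: x^n = x^i * x^(n-i)) by (rewrite <- pow_add; f_equal; lia).
    rewrite E; ring.
  - intro; apply Rmult_le_pos; auto. apply pow_le; auto.
  - intro; apply Rmult_le_pos; auto. apply pow_le; auto.
Qed.

Lemma convpow_pgf p G x : (forall k, 0 <= p k) -> 0 <= x ->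
  is_series (fun k => p k * x ^ k) G -> forall m,
  is_series (fun k => convpow p m k * x ^ k) (G ^ m).
Proof.
  intros Hp Hx HG m. induction m; simpl.
  - apply delta0_pgf.
  - apply conv_pgf; auto. apply convpow_nonneg; auto.
Qed.

(** * Power series and logarithms *)

Lemma is_pseries_series a x l : is_pseries a x l -> is_series (fun k => a k * x ^ k) l.
Proof.
  intro H. eapply is_series_ext; [|apply H]. intro n. rewrite pow_n_pow. apply Rmult_comm.
Qed.

Lemma series_is_pseries a x l : is_series (fun k => a k * x ^ k) l -> is_pseries a x l.
Proof.
  intro H. unfold is_pseries. eapply is_series_ext; [|apply H]. intro n.
  rewrite pow_n_pow. apply Rmult_comm.
Qed.

Lemma lt_CV_radius_of_bounded a x r M : Rabs x < r -> (forall n, Rabs (a n * r ^ n) <= M) ->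
  Rbar_lt (Rabs x) (CV_radius a).
Proof.
  intros Hr HM. destruct (CV_radius_bounded a) as [Hub _].
  assert (H : Rbar_le r (CV_radius a)) by (apply Hub; exists M; auto).
  apply Rbar_lt_le_trans with r; auto.
Qed.

Lemma pow_le_1 x n : 0 <= x <= 1 -> x ^ n <= 1.
Proof. intro H. rewrite <- (pow1 n). apply pow_incr. lra. Qed.

Lemma pow_le_anti x m n : 0 <= x <= 1 -> (m <= n)%nat -> x ^ n <= x ^ m.
Proof.
  intros Hx Hmn. replace n with (m + (n - m))%nat by lia. rewrite pow_add.
  rewrite <- (Rmult_1_r (x ^ m)) at 2. apply Rmult_le_compat_l; [apply pow_le; lra|].
  apply pow_le_1; auto.
Qed.

(* Coefficients of ln(1 + v) = sum_{k>=1} (-1)^(k-1) v^k / k. *)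
Definition log1p_coef (n : nat) : R := match n with O => 0 | S k => (-1) ^ k / INR (S k) end.

Lemma log1p_coef_bound n : Rabs (log1p_coef n) <= 1.
Proof.
  destruct n; unfold log1p_coef; [rewrite Rabs_R0; lra|].
  assert (HS : 1 <= INR (S n)) by (apply (le_INR 1); lia).
  unfold Rdiv. rewrite Rabs_mult, pow_1_abs, Rabs_inv, (Rabs_pos_eq (INR (S n))) by lra.
  rewrite Rmult_1_l, <- Rinv_1. apply Rinv_le_contravar; lra.
Qed.

Lemma log1p_radius v : Rabs v < 1 -> Rbar_lt (Rabs v) (CV_radius log1p_coef).
Proof.
  intro Hv. apply lt_CV_radius_of_bounded with ((Rabs v + 1)/2) 1; [lra|].
  intro n. rewrite Rabs_mult, <- (Rmult_1_r 1). pose proof (Rabs_pos v).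
  apply Rmult_le_compat; try apply Rabs_pos; [apply log1p_coef_bound|].
  rewrite <- RPow_abs. apply pow_le_1. split; [apply Rabs_pos|]. rewrite Rabs_pos_eq; lra.
Qed.

Lemma alternating_geom t : Rabs t < 1 -> PSeries (fun n => (-1) ^ n) t = / (1 + t).
Proof.
  intro Ht. rewrite PSeries_eq, (Series_ext _ (fun n => (- t) ^ n)).
  - rewrite Series_geom; [f_equal; ring|]. rewrite Rabs_Ropp; auto.
  - intro n. rewrite pow_n_pow. unfold scal; simpl; unfold mult; simpl.
    replace (- t) with ((-1) * t) by ring. rewrite Rpow_mult_distr. ring.
Qed.

(* The power series of log1p_coef is ln(1 + v): both sides vanish at 0 and have
   derivative 1/(1 + v) on (-1, 1). *)
Lemma log1p_PSeries v : Rabs v < 1 -> PSeries log1p_coef v = ln (1 + v).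
Proof.
  intro Hv.
  set (f := fun u => PSeries log1p_coef u - ln (1 + u)).
  assert (Hd : forall u, Rabs u < 1 -> is_derive f u 0).
  { intros u Hu. unfold f.
    replace 0 with (PSeries (PS_derive log1p_coef) u - / (1 + u)).
    - apply (is_derive_minus (V:=R_NormedModule)).
      + apply is_derive_PSeries, log1p_radius; auto.
      + assert (1 + u > 0) by (apply Rabs_def2 in Hu; lra).
        auto_derive; [lra|]. field. lra.
    - rewrite (PSeries_ext _ (fun n => (-1) ^ n)), alternating_geom; auto; [ring|].
      intro n. unfold PS_derive, log1p_coef. field. apply not_0_INR. lia. }
  assert (H0 : f 0 = 0).
  { unfold f. rewrite PSeries_0. simpl. rewrite Rplus_0_r, ln_1. ring. }
  assert (Hfv : f v = 0).
  { destruct (Rtotal_order v 0) as [Hlt|[Heq|Hgt]].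
    - rewrite <- H0. apply (eq_is_derive f v 0); auto. intros u Hu.
      apply Hd. apply Rabs_def1; apply Rabs_def2 in Hv; lra.
    - subst; auto.
    - rewrite <- H0. symmetry. apply (eq_is_derive f 0 v); auto. intros u Hu.
      apply Hd. apply Rabs_def1; apply Rabs_def2 in Hv; lra. }
  unfold f in Hfv. lra.
Qed.

Lemma log1p_series v : Rabs v < 1 -> is_series (fun k => log1p_coef k * v ^ k) (ln (1 + v)).
Proof.
  intro Hv. apply is_pseries_series. rewrite <- log1p_PSeries; auto.
  apply PSeries_correct, CV_radius_inside, log1p_radius; auto.
Qed.

(* Coefficients of -ln(1 - y) = sum_{k>=1} y^k / k. *)
Definition neglog_coef (k : nat) : R := match k with O => 0 | S j => / INR (S j) end.

Lemma neglog_log1p k y : - (log1p_coef k * (- y) ^ k) = neglog_coef k * y ^ k.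
Proof.
  destruct k as [|j]; unfold log1p_coef, neglog_coef; [simpl; ring|].
  replace (- y) with ((-1) * y) by ring. rewrite Rpow_mult_distr.
  assert (E : (-1) ^ j * (-1) ^ S j = -1).
  { simpl. replace ((-1) ^ j * (-1 * (-1) ^ j)) with (- ((-1)*(-1))^j)
      by (rewrite Rpow_mult_distr; ring). replace ((-1)*(-1)) with 1 by ring.
    rewrite pow1; ring. }
  unfold Rdiv.
  transitivity (- ((-1) ^ j * (-1) ^ S j) * / INR (S j) * y ^ S j); [ring|].
  rewrite E. ring.
Qed.

Lemma neglog_series y : Rabs y < 1 -> is_series (fun k => neglog_coef k * y ^ k) (- ln (1 - y)).
Proof.
  intro Hy.
  assert (Hs : is_series (fun k => log1p_coef k * (- y) ^ k) (ln (1 - y))).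
  { replace (1 - y) with (1 + (- y)) by ring. apply log1p_series. rewrite Rabs_Ropp; auto. }
  apply (is_series_opp (V:=R_NormedModule)) in Hs.
  eapply is_series_ext; [|apply Hs]. intro k. apply neglog_log1p.
Qed.

(* Coefficients 1/(k 2^k) of -ln(1 - x/2); they sum to ln 2 and define mu. *)
Definition log2_coef (k : nat) : R := match k with O => 0 | S j => / (INR (S j) * 2 ^ (S j)) end.

Lemma log2_coef_neglog k x : log2_coef k * x ^ k = neglog_coef k * (x / 2) ^ k.
Proof.
  destruct k as [|j]; unfold log2_coef, neglog_coef; [simpl; ring|].
  unfold Rdiv. rewrite Rpow_mult_distr, pow_inv, Rinv_mult. ring.
Qed.

Lemma log2_coef_series x : 0 <= x < 2 -> is_series (fun k => log2_coef k * x ^ k) (- ln (1 - x / 2)).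
Proof.
  intro Hx. eapply is_series_ext; [intro k; symmetry; apply log2_coef_neglog|].
  apply neglog_series. rewrite Rabs_pos_eq; lra.
Qed.

Lemma log2_coef_nonneg k : 0 <= log2_coef k.
Proof.
  destruct k; unfold log2_coef; [lra|]. left. apply Rinv_0_lt_compat.
  apply Rmult_lt_0_compat; [apply lt_0_INR; lia|apply pow_lt; lra].
Qed.

Lemma log2_coef_le_geom k : log2_coef k <= (/ 2) ^ k.
Proof.
  destruct k; [simpl; unfold log2_coef; lra|].
  unfold log2_coef. rewrite pow_inv, Rinv_mult.
  rewrite <- (Rmult_1_l (/ 2 ^ S k)) at 2. apply Rmult_le_compat_r.
  - left; apply Rinv_0_lt_compat, pow_lt; lra.
  - rewrite <- Rinv_1. apply Rinv_le_contravar; [lra|apply (le_INR 1); lia].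
Qed.

Lemma ln2_series : is_series log2_coef (ln 2).
Proof.
  pose proof (log2_coef_series 1 ltac:(lra)) as H1.
  replace (- ln (1 - 1 / 2)) with (ln 2) in H1.
  - eapply is_series_ext; [|apply H1]. intro k. cbv beta. rewrite pow1. apply Rmult_1_r.
  - replace (1 - 1/2) with (/ 2) by field. rewrite ln_Rinv by lra. ring.
Qed.

Lemma ln2_lt_1 : ln 2 < 1.
Proof.
  rewrite <- ln_exp with 1. apply ln_increasing; [lra|].
  pose proof (exp_ineq1 1). lra.
Qed.

Lemma ln2_pos : 0 < ln 2.
Proof. rewrite <- ln_1. apply ln_increasing; lra. Qed.

(** * H_n is a probability generating function *)

Lemma Hn_expansion n x : (1 <= n)%nat -> 0 <= x <= 1 ->
  Hn n x = (1 - ln 2 / INR n) + (- ln (1 - x / 2)) / INR n.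
Proof.
  intros Hn1 Hx. unfold Hn, H.
  replace (2 - x) with (2 * (1 - x / 2)) by field. rewrite ln_mult by lra.
  field. apply not_0_INR. lia.
Qed.

Definition Hn_pmf (n : nat) (k : nat) : R :=
  match k with O => 1 - ln 2 / INR n | S _ => log2_coef k / INR n end.

Lemma Hn_pmf_pgf n : (1 <= n)%nat -> has_pgf (Hn_pmf n) (Hn n).
Proof.
  intros Hn1 x Hx. apply is_series_Reals. rewrite Hn_expansion; auto.
  assert (Hn0 : INR n <> 0) by (apply not_0_INR; lia).
  eapply is_series_ext; [|apply (is_series_plus (V:=R_NormedModule)
     (fun k => delta0 k * x ^ k * (1 - ln 2 / INR n)) (fun k => log2_coef k * x ^ k / INR n))].
  - intro k. unfold plus; simpl. destruct k; unfold Hn_pmf, log2_coef; cbn [delta0];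
      field; repeat split; auto; try (apply pow_nonzero; lra); apply not_0_INR; lia.
  - pose proof (is_series_scal_r (1 - ln 2 / INR n) _ _ (delta0_pgf x)) as Hd.
    rewrite Rmult_1_l in Hd. exact Hd.
  - unfold Rdiv. apply is_series_scal_r, log2_coef_series; lra.
Qed.

Lemma Hn_pmf_nonneg n k : (1 <= n)%nat -> 0 <= Hn_pmf n k.
Proof.
  intro Hn1. assert (1 <= INR n) by (apply (le_INR 1); auto).
  destruct k; unfold Hn_pmf.
  - pose proof ln2_lt_1. pose proof ln2_pos.
    assert (ln 2 / INR n <= 1); [|lra].
    apply Rmult_le_reg_r with (INR n); [lra|]. unfold Rdiv.
    rewrite Rmult_assoc, Rinv_l; lra.
  - unfold Rdiv. apply Rmult_le_pos; [apply log2_coef_nonneg|].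
    left; apply Rinv_0_lt_compat; lra.
Qed.

Lemma Hn_is_pgf n : (1 <= n)%nat -> is_pgf (Hn n).
Proof.
  intros Hn1. exists (Hn_pmf n). split; [split|]; auto using Hn_pmf_pgf, Hn_pmf_nonneg.
  assert (E : Hn n 1 = 1).
  { unfold Hn, H. replace (2 - 1) with 1 by ring. rewrite ln_1. field. apply not_0_INR; lia. }
  pose proof (Hn_pmf_pgf n Hn1 1 ltac:(lra)) as Hs. rewrite E in Hs.
  apply is_series_Reals. eapply is_series_ext; [|apply is_series_Reals; apply Hs].
  intro k. cbv beta. rewrite pow1. apply Rmult_1_r.
Qed.

(* H_n^(i)(x) = (i-1)! / (n (2-x)^i) for i >= 1. *)
Definition Hn_deriv (n i : nat) (x : R) : R := INR (fact (i - 1)) / INR n / (2 - x) ^ i.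

Lemma Hn_deriv_deriv n i x : (1 <= i)%nat -> (1 <= n)%nat -> 0 < x < 2 ->
  derivable_pt_lim (Hn_deriv n i) x (Hn_deriv n (S i) x).
Proof.
  intros Hi Hn Hx. apply is_derive_Reals. unfold Hn_deriv.
  destruct i as [|j]; [lia|].
  replace (S j - 1)%nat with j by lia. replace (S (S j) - 1)%nat with (S j) by lia.
  assert (INR n <> 0) by (apply not_0_INR; lia).
  assert (2 - x <> 0) by lra.
  assert ((2 - x) ^ j <> 0) by (apply pow_nonzero; lra).
  auto_derive.
  - apply Rmult_integral_contrapositive_currified; [lra|apply pow_nonzero; lra].
  - rewrite fact_simpl, mult_INR. simpl pow.
    replace (match j with 0%nat => 1 | S _ => INR j + 1 end) with (INR (S j)) by reflexivity.
    match goal with |- ?a = ?b => change (@eq R a b) end.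
    replace (2 + - x) with (2 - x) by ring. set (y := 2 - x) in *. set (z := y ^ j) in *.
    field. repeat split; auto.
Qed.

Lemma Hn_deriv_first n x : (1 <= n)%nat -> 0 < x < 2 ->
  derivable_pt_lim (Hn n) x (Hn_deriv n 1 x).
Proof.
  intros Hn1 Hx. apply is_derive_Reals. unfold Hn, H, Hn_deriv.
  assert (INR n <> 0) by (apply not_0_INR; lia).
  auto_derive; [lra|].
  match goal with |- ?a = ?b => change (@eq R a b) end.
  simpl. field. split; auto. lra.
Qed.

Lemma Hn_deriv_iter n : (1 <= n)%nat -> forall j i, (1 <= i)%nat ->
  nth_deriv (fun x => 0 < x < 2) j (Hn_deriv n i) (Hn_deriv n (i + j)).
Proof.
  intros Hn j. induction j; intros i Hi.
  - rewrite Nat.add_0_r. constructor.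
  - apply nth_derivS with (Hn_deriv n (S i)).
    + intros x Hx. apply Hn_deriv_deriv; auto.
    + replace (i + S j)%nat with (S i + j)%nat by lia. apply IHj. lia.
Qed.

Lemma Hn_nth_deriv n k : (1 <= n)%nat -> (1 <= k)%nat ->
  nth_deriv (fun x => 0 < x < 2) k (Hn n) (Hn_deriv n k).
Proof.
  intros Hn1 Hk. destruct k as [|k']; [lia|].
  apply nth_derivS with (Hn_deriv n 1).
  - intros x Hx. apply Hn_deriv_first; auto.
  - apply (Hn_deriv_iter n Hn1 k' 1). lia.
Qed.

(* Since 1 - rho_n = 1/n, the normalized derivative is the constant (k-1)!/k. *)
Lemma Hn_deriv_normalized k m : (1 <= k)%nat ->
  Hn_deriv (S m) k 1 / (INR k * (1 - rho (S m))) = INR (fact (k - 1)) / INR k.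
Proof.
  intro Hk. unfold Hn_deriv, rho. replace (2 - 1) with 1 by ring. rewrite pow1.
  assert (INR (S m) <> 0) by (apply not_0_INR; lia).
  assert (INR k <> 0) by (apply not_0_INR; lia).
  replace (1 - (1 - / INR (S m))) with (/ INR (S m)) by ring.
  field; auto.
Qed.

(** * The Lévy measure mu and the exponent identity *)

Lemma psum_as_sum j : psum j = sum_f_R0 log2_coef (pred j).
Proof.
  induction j as [|j IH]; [reflexivity|].
  destruct j as [|i]; [simpl; unfold log2_coef; ring|].
  change (psum (S (S i))) with (psum (S i) + log2_coef (S i)).
  rewrite IH. reflexivity.
Qed.

(* j mu{j} is the tail  sum_{i>=j} 1/(i 2^i)  of the series of ln 2. *)
Definition mu_tail (j : nat) : R := ln 2 - psum j.

Lemma mu_tail_series j : is_series (fun i => log2_coef (j + i)) (mu_tail j).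
Proof.
  destruct j as [|j].
  - unfold mu_tail. simpl psum. rewrite Rminus_0_r. apply ln2_series.
  - apply is_series_incr_n; [lia|]. unfold mu_tail. rewrite sum_n_Reals, <- psum_as_sum.
    match goal with |- is_series _ ?l => replace l with (ln 2) by (unfold plus; simpl; ring) end.
    apply ln2_series.
Qed.

Lemma mu_tail_bound j : 0 <= mu_tail j <= 2 * (/ 2) ^ j.
Proof.
  split.
  - apply (series_nonneg (fun i => log2_coef (j + i))); [intro; apply log2_coef_nonneg|].
    apply mu_tail_series.
  - apply (series_le (fun i => log2_coef (j + i)) (fun i => (/ 2) ^ j * (/ 2) ^ i)).
    + intro n. split; [apply log2_coef_nonneg|]. rewrite <- pow_add. apply log2_coef_le_geom.
    + apply mu_tail_series.
    + replace (2 * (/ 2) ^ j) with ((/ 2) ^ j * / (1 - / 2)) by field.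
      apply (is_series_scal_l (V:=R_NormedModule)).
      apply is_series_geom. rewrite Rabs_pos_eq; lra.
Qed.

Lemma mu_tail_succ j : mu_tail (S j) = mu_tail j - log2_coef j.
Proof.
  unfold mu_tail. rewrite !psum_as_sum. destruct j; [simpl; unfold log2_coef; ring|].
  simpl. ring.
Qed.

Lemma mu_as_tail j : mu j = mu_tail j / INR j.
Proof. unfold mu, mu_tail, Rdiv. ring. Qed.

(* Coefficients of the generating function M(x) = sum_{j>=1} mu{j} x^j. *)
Definition mu_coef (j : nat) : R := match j with O => 0 | S _ => mu j end.

Lemma mu_coef_bound j : 0 <= mu_coef j <= 2 * (/ 2) ^ j.
Proof.
  destruct j as [|j]; [simpl; lra|].
  unfold mu_coef. rewrite mu_as_tail. pose proof (mu_tail_bound (S j)).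
  assert (1 <= INR (S j)) by (apply (le_INR 1); lia).
  split.
  - unfold Rdiv; apply Rmult_le_pos; [lra|]. left; apply Rinv_0_lt_compat; lra.
  - apply Rle_trans with (mu_tail (S j)); [|lra].
    unfold Rdiv. rewrite <- (Rmult_1_r (mu_tail (S j))) at 2. apply Rmult_le_compat_l; [lra|].
    rewrite <- Rinv_1. apply Rinv_le_contravar; lra.
Qed.

Lemma mu_coef_nonneg j : 0 <= mu_coef j.
Proof. apply mu_coef_bound. Qed.

Lemma mu_coef_radius x : Rabs x < 2 -> Rbar_lt (Rabs x) (CV_radius mu_coef).
Proof.
  intro Hx. apply lt_CV_radius_of_bounded with ((Rabs x + 2) / 2) 2; [lra|].
  intro n. pose proof (Rabs_pos x). rewrite Rabs_mult.
  rewrite (Rabs_pos_eq (mu_coef n)) by apply mu_coef_bound.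
  rewrite <- RPow_abs, (Rabs_pos_eq ((Rabs x + 2) / 2)) by lra.
  apply Rle_trans with (2 * (/ 2) ^ n * ((Rabs x + 2) / 2) ^ n).
  - apply Rmult_le_compat_r; [apply pow_le; lra|apply mu_coef_bound].
  - rewrite Rmult_assoc, <- Rpow_mult_distr.
    apply Rle_trans with (2 * 1); [|lra].
    apply Rmult_le_compat_l; [lra|]. apply pow_le_1. split; [apply Rmult_le_pos; lra|].
    apply Rmult_le_reg_l with 2; [lra|]. field_simplify; lra.
Qed.

Lemma mu_coef_series x : Rabs x < 2 -> is_series (fun j => mu (S j) * x ^ S j) (PSeries mu_coef x).
Proof.
  intro Hx. apply (is_series_shift (fun j => mu_coef j * x ^ j)); [|simpl; ring].
  apply is_pseries_series, PSeries_correct, CV_radius_inside, mu_coef_radius; auto.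
Qed.

Lemma PS_derive_mu_coef j : PS_derive mu_coef j = mu_tail (S j).
Proof.
  unfold PS_derive, mu_coef. rewrite mu_as_tail. field. apply not_0_INR; lia.
Qed.

(* (1 - x) M'(x) = ln(2 - x): multiplying by 1 - x telescopes the tails. *)
Lemma mu_deriv_value x : 0 < x < 1 -> (1 - x) * PSeries (PS_derive mu_coef) x = ln (2 - x).
Proof.
  intro Hx.
  assert (Hr : Rbar_lt (Rabs x) (CV_radius (PS_derive mu_coef))).
  { rewrite CV_radius_derive. apply mu_coef_radius, Rabs_def1; lra. }
  pose proof (PSeries_correct _ x (CV_radius_inside _ _ Hr)) as H1.
  apply is_pseries_series in H1. set (S1 := PSeries (PS_derive mu_coef) x) in *.
  assert (H2 : is_series (fun j => match j with O => 0 | S i => PS_derive mu_coef i * x ^ S i end)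
                         (x * S1)).
  { apply is_series_decr_1. simpl.
    match goal with |- is_series _ ?l => replace l with (scal x S1) end.
    2:{ unfold plus, opp, scal; simpl. unfold mult; simpl. change (x * S1 = x * S1 + - 0). ring. }
    eapply is_series_ext; [|apply (is_series_scal_l (V:=R_NormedModule) x _ _ H1)].
    intro n. unfold scal; simpl; unfold mult; simpl. ring. }
  assert (H3 := is_series_minus (V:=R_NormedModule) _ _ _ _ H1 H2).
  assert (H4 : is_series (fun j => ln 2 * delta0 j * x ^ j - log2_coef j * x ^ j)
                         (ln 2 - - ln (1 - x / 2))).
  { apply (is_series_minus (V:=R_NormedModule)).
    - pose proof (is_series_scal_r (ln 2) _ _ (delta0_pgf x)) as Hd.
      rewrite Rmult_1_l in Hd. eapply is_series_ext; [|apply Hd]. intro n. cbv beta. rring.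
    - apply log2_coef_series. lra. }
  assert (E : S1 - x * S1 = ln 2 - - ln (1 - x / 2)).
  { eapply is_series_limit_unique; [exact H3|].
    eapply is_series_ext; [|apply H4]. intro n. destruct n as [|i]; cbv beta iota;
      rewrite !PS_derive_mu_coef.
    - simpl. unfold mu_tail. rewrite psum_as_sum. simpl. unfold log2_coef, plus, opp; simpl. ring.
    - rewrite (mu_tail_succ (S i)). cbn [delta0]. unfold plus, opp; simpl. rring. }
  replace (2 - x) with (2 * (1 - x / 2)) by field. rewrite ln_mult by lra.
  replace ((1 - x) * S1) with (S1 - x * S1) by ring. rewrite E. ring.
Qed.

(* Coefficients 1/l^2 of A(v + 1) = sum_{l>=1} v^l / l^2. *)
Definition dilog_coef (l : nat) : R := match l with O => 0 | S k => / (INR (S k)) ^ 2 end.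

Lemma dilog_radius y : Rabs y < 1 -> Rbar_lt (Rabs y) (CV_radius dilog_coef).
Proof.
  intro Hy. apply lt_CV_radius_of_bounded with ((Rabs y + 1) / 2) 1; [lra|].
  intro n. pose proof (Rabs_pos y). rewrite Rabs_mult, <- RPow_abs.
  rewrite (Rabs_pos_eq ((Rabs y + 1) / 2)) by lra.
  apply Rle_trans with (1 * 1); [|lra].
  apply Rmult_le_compat; [apply Rabs_pos | apply pow_le; lra | |apply pow_le_1; lra].
  destruct n; cbn [dilog_coef]; [rewrite Rabs_R0; lra|].
  assert (1 <= INR (S n)) by (apply (le_INR 1); lia).
  replace (INR (S n) ^ 2) with (INR (S n) * INR (S n)) by ring.
  rewrite Rabs_pos_eq; [|left; apply Rinv_0_lt_compat; nra].
  rewrite <- Rinv_1. apply Rinv_le_contravar; nra.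
Qed.

Lemma PS_derive_dilog l : PS_derive dilog_coef l = neglog_coef (S l).
Proof.
  unfold PS_derive, dilog_coef, neglog_coef.
  assert (INR (S l) <> 0) by (apply not_0_INR; lia). set (u := INR (S l)) in *. field. auto.
Qed.

Lemma dilog_deriv x : 0 < x < 2 ->
  is_derive (fun x => PSeries dilog_coef (x - 1)) x (PSeries (PS_derive dilog_coef) (x - 1)).
Proof.
  intro Hx.
  assert (Hr : Rbar_lt (Rabs (x - 1)) (CV_radius dilog_coef)) by (apply dilog_radius, Rabs_def1; lra).
  pose proof (is_derive_PSeries dilog_coef (x - 1) Hr) as Hd.
  assert (Hg : is_derive (fun x : R => x - 1) x 1) by (auto_derive; auto; ring).
  pose proof (is_derive_comp (PSeries dilog_coef) (fun x => x - 1) x _ _ Hd Hg) as Hc.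
  unfold scal in Hc; simpl in Hc; unfold mult in Hc; simpl in Hc. rewrite Rmult_1_l in Hc. exact Hc.
Qed.

Lemma dilog_deriv_value x : 0 < x < 1 ->
  (x - 1) * PSeries (PS_derive dilog_coef) (x - 1) = - ln (2 - x).
Proof.
  intro Hx. rewrite (PSeries_ext _ (fun l => neglog_coef (S l))) by apply PS_derive_dilog.
  rewrite <- PSeries_incr_1, (PSeries_ext _ neglog_coef) by (intro n; destruct n; reflexivity).
  apply is_pseries_unique, series_is_pseries.
  replace (2 - x) with (1 - (x - 1)) by ring. apply neglog_series, Rabs_def1; lra.
Qed.

Definition exponent_gap (x : R) : R := PSeries dilog_coef (x - 1) - PSeries mu_coef x.

Lemma exponent_gap_deriv x : 0 < x < 1 -> is_derive exponent_gap x 0.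
Proof.
  intro Hx. unfold exponent_gap.
  replace 0 with (PSeries (PS_derive dilog_coef) (x - 1) - PSeries (PS_derive mu_coef) x).
  - apply (is_derive_minus (V:=R_NormedModule)); [apply dilog_deriv; lra|].
    apply is_derive_PSeries, mu_coef_radius, Rabs_def1; lra.
  - pose proof (dilog_deriv_value x Hx). pose proof (mu_deriv_value x Hx).
    apply Rmult_eq_reg_l with (x - 1); [|lra].
    rewrite Rmult_minus_distr_l, H.
    replace ((x - 1) * PSeries (PS_derive mu_coef) x)
      with (- ((1 - x) * PSeries (PS_derive mu_coef) x)) by ring.
    rewrite H0. ring.
Qed.

Lemma exponent_gap_cont1 : continuity_pt exponent_gap 1.
Proof.
  unfold exponent_gap. apply continuity_pt_minus.
  - apply (continuity_pt_comp (fun x => x - 1) (PSeries dilog_coef)).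
    + apply continuity_pt_minus; [apply continuity_pt_id|apply continuity_pt_const; intros a b; auto].
    + apply PSeries_continuity. replace (1 - 1) with 0 by ring. apply dilog_radius.
      rewrite Rabs_R0; lra.
  - apply PSeries_continuity, mu_coef_radius. rewrite Rabs_R1; lra.
Qed.

(* Constant on (0,1) and continuous at 1, the gap equals its value at 1. *)
Lemma exponent_gap_const x : 0 < x < 1 -> exponent_gap x = exponent_gap 1.
Proof.
  intro Hx. apply cond_eq. intros eps Heps.
  destruct (exponent_gap_cont1 eps Heps) as [alp [Halp Hc]].
  set (y := 1 - Rmin alp (1 - x) / 2).
  assert (Hmin1 : Rmin alp (1 - x) <= alp) by apply Rmin_l.
  assert (Hmin2 : Rmin alp (1 - x) <= 1 - x) by apply Rmin_r.
  assert (Hmin0 : 0 < Rmin alp (1 - x)) by (apply Rmin_glb_lt; lra).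
  assert (Hxy : exponent_gap x = exponent_gap y).
  { apply (eq_is_derive exponent_gap x y); [|unfold y; lra].
    intros t Ht. apply exponent_gap_deriv. unfold y in Ht. lra. }
  rewrite Hxy. apply Hc. split.
  - unfold D_x, no_cond; split; auto. unfold y. lra.
  - simpl. unfold R_dist, y. rewrite Rabs_left; lra.
Qed.

Lemma dilog_mu_identity x : 0 < x < 1 ->
  PSeries dilog_coef (x - 1) = PSeries mu_coef x - PSeries mu_coef 1.
Proof.
  intro Hx. pose proof (exponent_gap_const x Hx) as H. unfold exponent_gap in H.
  replace (1 - 1) with 0 in H by ring. rewrite PSeries_0 in H. simpl in H. lra.
Qed.

Lemma exponent_identity x : 0 < x < 1 ->
  exists s0 : R,
    infinite_sum (fun l => (x - 1) ^ (S l) / (INR (S l)) ^ 2) s0 /\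
    infinite_sum (fun j => mu (S j) * (x ^ (S j) - 1)) s0.
Proof.
  intros Hx. exists (PSeries dilog_coef (x - 1)). split.
  - apply is_series_Reals.
    eapply is_series_ext; [|apply (is_series_shift (fun l => dilog_coef l * (x - 1) ^ l))].
    + intro n. unfold dilog_coef, Rdiv. rring.
    + apply is_pseries_series, PSeries_correct, CV_radius_inside, dilog_radius, Rabs_def1; lra.
    + simpl. ring.
  - apply is_series_Reals. rewrite dilog_mu_identity by auto.
    eapply is_series_ext;
      [|apply (is_series_minus (V:=R_NormedModule)); apply mu_coef_series;
        [apply Rabs_def1; lra|rewrite Rabs_R1; lra]].
    intro n. cbv beta. rewrite pow1. unfold plus, opp; simpl. ring.
Qed.

Fixpoint sum1 (F : nat -> R) (n : nat) : R :=
  match n with O => 0 | S m => sum1 F m + F (S m) end.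

Lemma sum1_S F n : sum1 F (S n) = sum1 F n + F (S n).
Proof. reflexivity. Qed.

Lemma sum1_ext F G n : (forall k, (1 <= k <= n)%nat -> F k = G k) -> sum1 F n = sum1 G n.
Proof.
  induction n; intro H; simpl; auto.
  rewrite IHn, H; [reflexivity|lia|]. intros; apply H; lia.
Qed.

Lemma sum1_plus F G n : sum1 (fun k => F k + G k) n = sum1 F n + sum1 G n.
Proof. induction n; simpl; [ring|]. rewrite IHn. ring. Qed.

Lemma sum1_minus F G n : sum1 (fun k => F k - G k) n = sum1 F n - sum1 G n.
Proof. induction n; simpl; [ring|]. rewrite IHn. ring. Qed.

Lemma sum1_scal c F n : sum1 (fun k => c * F k) n = c * sum1 F n.
Proof. induction n; simpl; [ring|]. rewrite IHn. ring. Qed.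

Lemma sum1_const c n : sum1 (fun _ => c) n = INR n * c.
Proof. induction n; simpl sum1; [simpl; ring|]. rewrite IHn, S_INR. ring. Qed.

Lemma sum1_le F G n : (forall k, (1 <= k <= n)%nat -> F k <= G k) -> sum1 F n <= sum1 G n.
Proof.
  induction n; intro H; simpl; [lra|].
  apply Rplus_le_compat; [apply IHn; intros; apply H; lia|apply H; lia].
Qed.

Lemma sum1_nonneg F n : (forall k, (1 <= k <= n)%nat -> 0 <= F k) -> 0 <= sum1 F n.
Proof.
  intro H. replace 0 with (sum1 (fun _ => 0) n) by (rewrite sum1_const; ring).
  apply sum1_le; auto.
Qed.

Lemma sum1_abs F n : Rabs (sum1 F n) <= sum1 (fun k => Rabs (F k)) n.
Proof.
  induction n; simpl; [rewrite Rabs_R0; lra|].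
  eapply Rle_trans; [apply Rabs_triang|lra].
Qed.

Lemma sum1_mono F n m : (forall k, 0 <= F k) -> (n <= m)%nat -> sum1 F n <= sum1 F m.
Proof. intros HF Hnm. induction Hnm; [lra|]. simpl. specialize (HF (S m)). lra. Qed.

Lemma sum1_series (f : nat -> nat -> R) (S : nat -> R) n :
  (forall k, (1 <= k <= n)%nat -> is_series (f k) (S k)) ->
  is_series (fun l => sum1 (fun k => f k l) n) (sum1 S n).
Proof.
  induction n; intro H; simpl.
  - apply is_series_of_const_partial. intro N; induction N; simpl; [ring|rewrite IHN; ring].
  - apply (is_series_plus (V:=R_NormedModule)); [apply IHn; intros; apply H; lia|apply H; lia].
Qed.

Lemma sum1_telescope (h : R -> R) n : sum1 (fun k => h (INR k) - h (INR k - 1)) n = h (INR n) - h 0.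
Proof.
  induction n; [simpl; ring|]. rewrite sum1_S, IHn.
  replace (INR (S n) - 1) with (INR n) by (rewrite S_INR; ring). ring.
Qed.

(** * Riemann sums and Tannery's theorem *)

Lemma pow_diff_bounds (a b : R) m : 0 <= b <= a ->
  INR (S m) * b ^ m * (a - b) <= a ^ S m - b ^ S m <= INR (S m) * a ^ m * (a - b).
Proof.
  intro Hab. induction m as [|m IH]; [simpl; lra|].
  assert (Hbm : 0 <= b ^ m) by (apply pow_le; lra).
  assert (Hbam : b ^ m <= a ^ m) by (apply pow_incr; lra).
  assert (E : a ^ S (S m) - b ^ S (S m) = a * (a ^ S m - b ^ S m) + b ^ S m * (a - b))
    by (simpl; ring).
  rewrite E. rewrite !S_INR in *. simpl pow in *.
  assert (HSm : 0 <= INR m) by apply pos_INR.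
  destruct IH as [IH1 IH2]. split.
  - assert (a * ((INR m + 1) * b ^ m * (a - b)) <= a * (a * a ^ m - b * b ^ m))
      by (apply Rmult_le_compat_l; lra).
    assert (b * ((INR m + 1) * b ^ m * (a - b)) <= a * ((INR m + 1) * b ^ m * (a - b))).
    { apply Rmult_le_compat_r; [|lra]. apply Rmult_le_pos; [|lra]. apply Rmult_le_pos; lra. }
    nra.
  - assert (a * (a * a ^ m - b * b ^ m) <= a * ((INR m + 1) * a ^ m * (a - b)))
      by (apply Rmult_le_compat_l; lra).
    assert (b * b ^ m * (a - b) <= a * a ^ m * (a - b))
      by (apply Rmult_le_compat_r; [lra|apply Rmult_le_compat; lra]).
    nra.
Qed.

Lemma power_sum_bounds m n :
  INR n ^ S m <= INR (S m) * sum1 (fun k => INR k ^ m) n <= INR n ^ S m + INR (S m) * INR n ^ m.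
Proof.
  set (U := sum1 (fun k => INR k ^ m) n).
  set (V := sum1 (fun k => (INR k - 1) ^ m) n).
  assert (Htel : sum1 (fun k => INR k ^ S m - (INR k - 1) ^ S m) n = INR n ^ S m).
  { rewrite (sum1_telescope (fun y => y ^ S m)). simpl. ring. }
  assert (Hup : INR (S m) * V <= INR n ^ S m).
  { rewrite <- Htel. unfold V. rewrite <- sum1_scal. apply sum1_le. intros k Hk.
    assert (1 <= INR k) by (apply (le_INR 1); lia).
    pose proof (pow_diff_bounds (INR k) (INR k - 1) m ltac:(lra)). lra. }
  assert (Hlo : INR n ^ S m <= INR (S m) * U).
  { rewrite <- Htel. unfold U. rewrite <- sum1_scal. apply sum1_le. intros k Hk.
    assert (1 <= INR k) by (apply (le_INR 1); lia).
    pose proof (pow_diff_bounds (INR k) (INR k - 1) m ltac:(lra)). lra. }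
  assert (HUV : U - V <= INR n ^ m).
  { unfold U, V. rewrite <- sum1_minus, (sum1_telescope (fun y => y ^ m)).
    assert (0 <= 0 ^ m) by (apply pow_le; lra). lra. }
  assert (0 < INR (S m)) by (apply lt_0_INR; lia).
  nra.
Qed.

(* riemann_sum l n = (1/n) sum_{k=1}^n (k/n)^(l-1), which tends to 1/l. *)
Definition riemann_sum (l n : nat) : R := sum1 (fun k => (INR k / INR n) ^ l / INR k) n.

Lemma riemann_sum_bounds m n : (1 <= n)%nat ->
  / INR (S m) <= riemann_sum (S m) n <= / INR (S m) + / INR n.
Proof.
  intro Hn.
  assert (Hn0 : 0 < INR n) by (apply lt_0_INR; lia).
  assert (HS0 : 0 < INR (S m)) by (apply lt_0_INR; lia).
  assert (Hnp : 0 < INR n ^ S m) by (apply pow_lt; lra).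
  assert (E : riemann_sum (S m) n = sum1 (fun k => INR k ^ m) n / INR n ^ S m).
  { transitivity (/ INR n ^ S m * sum1 (fun k => INR k ^ m) n); [|unfold Rdiv; ring].
    unfold riemann_sum. rewrite <- sum1_scal. apply sum1_ext.
    intros k Hk. assert (0 < INR k) by (apply lt_0_INR; lia).
    unfold Rdiv. rewrite Rpow_mult_distr, pow_inv. simpl pow.
    assert (INR n ^ m <> 0) by (apply pow_nonzero; lra).
    set (a := INR k ^ m). set (b := INR n ^ m) in *. field. repeat split; lra. }
  rewrite E. destruct (power_sum_bounds m n) as [Hlo Hhi].
  set (U := sum1 (fun k => INR k ^ m) n) in *.
  replace (INR n ^ S m) with (INR n * INR n ^ m) in * by reflexivity.
  assert (0 < INR n ^ m) by (apply pow_lt; lra).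
  split.
  - apply Rmult_le_reg_l with (INR (S m) * (INR n * INR n ^ m)); [nra|].
    field_simplify; [nra|lra|nra].
  - apply Rmult_le_reg_l with (INR (S m) * (INR n * INR n ^ m)); [nra|].
    field_simplify; [nra|nra|nra].
Qed.

Lemma riemann_sum_lim m : Un_cv (fun n => riemann_sum (S m) n) (/ INR (S m)).
Proof.
  intros e He. destruct (archimed_cor1 e He) as [N [HN HN0]].
  exists N. intros n Hn. unfold R_dist.
  pose proof (riemann_sum_bounds m n ltac:(lia)).
  assert (/ INR n <= / INR N) by (apply Rinv_le_contravar; [apply lt_0_INR; lia|apply le_INR; lia]).
  rewrite Rabs_pos_eq; lra.
Qed.

(* Uniform domination, needed for Tannery's theorem. *)
Lemma riemann_sum_weighted_bound l n : Rabs (log1p_coef l * riemann_sum l n) <= 2.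
Proof.
  destruct l as [|m]; [simpl log1p_coef; rewrite Rmult_0_l, Rabs_R0; lra|].
  destruct n as [|n]; [unfold riemann_sum; simpl; rewrite Rmult_0_r, Rabs_R0; lra|].
  pose proof (riemann_sum_bounds m (S n) ltac:(lia)).
  assert (/ INR (S m) <= 1).
  { rewrite <- Rinv_1. apply Rinv_le_contravar; [lra|apply (le_INR 1); lia]. }
  assert (/ INR (S n) <= 1).
  { rewrite <- Rinv_1. apply Rinv_le_contravar; [lra|apply (le_INR 1); lia]. }
  assert (0 < / INR (S m)) by (apply Rinv_0_lt_compat, lt_0_INR; lia).
  rewrite Rabs_mult. pose proof (log1p_coef_bound (S m)).
  rewrite (Rabs_pos_eq (riemann_sum _ _)) by lra.
  apply Rle_trans with (1 * 2); [|lra]. apply Rmult_le_compat; try lra. apply Rabs_pos.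
Qed.

Lemma Un_cv_const c : Un_cv (fun _ => c) c.
Proof. intros e He. exists O. intros. unfold R_dist. rewrite Rminus_diag_eq, Rabs_R0; auto. Qed.

Lemma Un_cv_eventually_eq (u v : nat -> R) l N :
  (forall n, (N <= n)%nat -> u n = v n) -> Un_cv u l -> Un_cv v l.
Proof.
  intros Huv Hu e He. destruct (Hu e He) as [M HM]. exists (max M N). intros n Hn.
  rewrite <- Huv by lia. apply HM. lia.
Qed.

Lemma finite_sum_diff_cv (f : nat -> nat -> R) (g : nat -> R) L :
  (forall l, Un_cv (fun n => f n l) (g l)) ->
  Un_cv (fun n => sum_f_R0 (fun l => f n l - g l) L) 0.
Proof.
  intro Hl. induction L; simpl.
  - replace 0 with (g O - g O) by ring. apply CV_minus; [apply Hl|apply Un_cv_const].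
  - replace 0 with (0 + (g (S L) - g (S L))) by ring.
    apply CV_plus; [apply IHL|]. apply CV_minus; [apply Hl|apply Un_cv_const].
Qed.

Lemma dominated_tail_bound (f g M : nat -> R) SM L :
  (forall l, Rabs (f l) <= M l) -> (forall l, Rabs (g l) <= M l) -> is_series M SM ->
  Rabs (Series (fun k => f (S L + k)%nat - g (S L + k)%nat)) <= 2 * (SM - sum_f_R0 M L).
Proof.
  intros Hf Hg HM.
  assert (HexM : ex_series (fun k => M (S L + k)%nat)) by (apply ex_series_incr_n; exists SM; auto).
  assert (EM : Series (fun k => M (S L + k)%nat) = SM - sum_f_R0 M L).
  { rewrite <- (is_series_unique _ _ HM), (Series_incr_n M (S L)) by (lia || exists SM; auto).
    simpl pred. ring. }
  assert (Hterm : forall k, Rabs (f (S L + k)%nat - g (S L + k)%nat) <= 2 * M (S L + k)%nat).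
  { intro k. unfold Rminus; eapply Rle_trans; [apply Rabs_triang|]. rewrite Rabs_Ropp.
    pose proof (Hf (S L + k)%nat). pose proof (Hg (S L + k)%nat). lra. }
  assert (Hex2 : ex_series (fun k => 2 * M (S L + k)%nat))
    by (apply (ex_series_scal_l (V:=R_NormedModule)) with (c := 2); auto).
  eapply Rle_trans; [apply Series_Rabs|].
  - apply (ex_series_le (V:=R_CompleteNormedModule)) with (fun k => 2 * M (S L + k)%nat); auto.
    intro k. unfold norm; simpl. rewrite Rabs_Rabsolu. apply Hterm.
  - rewrite <- EM, <- Series_scal_l. apply Series_le; auto.
    intro k. split; [apply Rabs_pos|apply Hterm].
Qed.

Lemma tannery (f : nat -> nat -> R) (g M : nat -> R) SM :
  (forall n l, Rabs (f n l) <= M l) -> is_series M SM ->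
  (forall l, Un_cv (fun n => f n l) (g l)) ->
  Un_cv (fun n => Series (f n)) (Series g).
Proof.
  intros Hb HM Hl.
  assert (HM0 : forall l, 0 <= M l) by (intro l; eapply Rle_trans; [apply Rabs_pos|apply (Hb O)]).
  assert (Hg : forall l, Rabs (g l) <= M l).
  { intro l. pose proof (Hl l) as H. apply is_lim_seq_Reals, is_lim_seq_abs in H.
    apply (is_lim_seq_le (fun n => Rabs (f n l)) (fun _ => M l) (Rabs (g l)) (M l)); auto.
    apply is_lim_seq_const. }
  assert (HexM : ex_series M) by (exists SM; auto).
  assert (Hexf : forall n, ex_series (f n))
    by (intro n; apply (ex_series_le (V:=R_CompleteNormedModule)) with M; auto).
  assert (Hexg : ex_series g) by (apply (ex_series_le (V:=R_CompleteNormedModule)) with M; auto).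
  intros eps Heps.
  pose proof HM as HM'. apply is_series_Reals in HM'.
  destruct (HM' (eps / 4)) as [L HL]; [lra|].
  specialize (HL L (Nat.le_refl L)). unfold R_dist in HL.
  assert (Hp : 0 <= SM - sum_f_R0 M L) by (pose proof (partial_sum_le_series M SM HM0 HM L); lra).
  rewrite Rabs_minus_sym, Rabs_pos_eq in HL by lra.
  destruct (finite_sum_diff_cv f g L Hl (eps / 2)) as [N HN]; [lra|].
  exists N. intros n Hn. specialize (HN n Hn). unfold R_dist in *. rewrite Rminus_0_r in HN.
  assert (Hexd : ex_series (fun l => f n l - g l)) by (apply (ex_series_minus (V:=R_NormedModule)); auto).
  rewrite <- Series_minus, (Series_incr_n _ (S L)) by (auto || lia). simpl pred.
  pose proof (dominated_tail_bound (f n) g M SM L (Hb n) Hg HM).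
  eapply Rle_lt_trans; [apply Rabs_triang|]. lra.
Qed.

(* T_n(t) = sum_{k<=n} ln(1 + t k/n)/k, the model for -ln P_n(1 - t). *)
Definition log_riemann (t : R) (n : nat) : R :=
  sum1 (fun k => ln (1 + t * INR k / INR n) / INR k) n.

Lemma log_riemann_series t n : 0 <= t < 1 -> (1 <= n)%nat ->
  is_series (fun l => log1p_coef l * t ^ l * riemann_sum l n) (log_riemann t n).
Proof.
  intros Ht Hn. unfold log_riemann.
  assert (Hn0 : 0 < INR n) by (apply lt_0_INR; lia).
  eapply is_series_ext;
    [|apply (sum1_series (fun k l => log1p_coef l * (t * INR k / INR n) ^ l / INR k))].
  - intro l. cbv beta. unfold riemann_sum. rewrite <- sum1_scal. apply sum1_ext.
    intros k Hk. unfold Rdiv. rewrite !Rpow_mult_distr. ring.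
  - intros k Hk. unfold Rdiv. apply is_series_scal_r, log1p_series.
    assert (1 <= INR k <= INR n) by (split; [apply (le_INR 1)|apply le_INR]; lia).
    assert (0 <= t * INR k * / INR n <= t).
    { split; [apply Rmult_le_pos; [nra|left; apply Rinv_0_lt_compat; lra]|].
      apply Rmult_le_reg_r with (INR n); auto. rewrite Rmult_assoc, Rinv_l by lra. nra. }
    rewrite Rabs_pos_eq; lra.
Qed.

(* T_n(1 - x) -> -A(x), by Tannery's theorem and riemann_sum l n -> 1/l. *)
Lemma log_riemann_lim x : 0 < x < 1 ->
  Un_cv (fun n => log_riemann (1 - x) n) (- PSeries dilog_coef (x - 1)).
Proof.
  intro Hx. set (t := 1 - x).
  apply Un_cv_eventually_eq with (fun n => Series (fun l => log1p_coef l * t ^ l * riemann_sum l n)) 1%nat.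
  { intros n Hn. apply is_series_unique, log_riemann_series; auto. unfold t; lra. }
  replace (- PSeries dilog_coef (x - 1)) with (Series (fun l => log1p_coef l * t ^ l * neglog_coef l)).
  - apply tannery with (M := fun l => 2 * t ^ l) (SM := 2 * / (1 - t)).
    + intros n l. replace (log1p_coef l * t ^ l * riemann_sum l n)
        with ((log1p_coef l * riemann_sum l n) * t ^ l) by ring.
      rewrite Rabs_mult, (Rabs_pos_eq (t ^ l)) by (apply pow_le; unfold t; lra).
      rewrite Rmult_comm, (Rmult_comm 2). apply Rmult_le_compat_l; [apply pow_le; unfold t; lra|].
      apply riemann_sum_weighted_bound.
    + apply (is_series_scal_l (V:=R_NormedModule)) with (c := 2), is_series_geom.
      unfold t; rewrite Rabs_pos_eq; lra.
    + intro l. destruct l as [|m].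
      * simpl log1p_coef. rewrite !Rmult_0_l.
        apply (Un_cv_eventually_eq (fun _ => 0) _ 0 O); [intros; simpl; ring|apply Un_cv_const].
      * apply (CV_mult (fun _ => log1p_coef (S m) * t ^ S m)); [apply Un_cv_const|apply riemann_sum_lim].
  - assert (Hr : Rabs (x - 1) < 1) by (apply Rabs_def1; lra).
    rewrite <- (is_series_unique _ _ (is_pseries_series _ _ _
                  (PSeries_correct _ _ (CV_radius_inside _ _ (dilog_radius (x-1) Hr))))).
    rewrite <- Series_opp. apply Series_ext. intro n.
    destruct n as [|m]; [simpl; ring|].
    unfold log1p_coef, neglog_coef, dilog_coef, t. replace (x - 1) with ((-1) * (1 - x)) by ring.
    rewrite Rpow_mult_distr. replace ((-1) ^ S m) with (- (-1) ^ m) by (simpl; ring).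
    assert (INR (S m) <> 0) by (apply not_0_INR; lia).
    set (a := (-1) ^ m). set (b := (1 - x) ^ S m). set (c := INR (S m)) in *. field. auto.
Qed.

(** * The generating function of X_n *)

Definition pgf (p : nat -> R) (x : R) : R := Series (fun k => p k * x ^ k).

Lemma pmf_series (p : nat -> R) : is_pmf p -> is_series p 1.
Proof. intros [_ H]. apply is_series_Reals; auto. Qed.

Lemma pgf_spec p x : is_pmf p -> 0 <= x <= 1 ->
  is_series (fun k => p k * x ^ k) (pgf p x) /\ 0 <= pgf p x <= 1.
Proof.
  intros Hp Hx. pose proof (pmf_series _ Hp) as H1. destruct Hp as [H0 _].
  assert (Hb : forall k, 0 <= p k * x ^ k <= p k).
  { intro k. split; [apply Rmult_le_pos; auto; apply pow_le; lra|].
    rewrite <- (Rmult_1_r (p k)) at 2. apply Rmult_le_compat_l; auto. apply pow_le_1; lra. }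
  assert (Hex : ex_series (fun k => p k * x ^ k)).
  { apply (ex_series_le (V:=R_CompleteNormedModule)) with p; [|exists 1; auto].
    intro k. unfold norm; simpl. rewrite Rabs_pos_eq; apply Hb. }
  pose proof (Series_correct _ Hex) as Hs. split; auto. split.
  - apply (series_nonneg _ _ (fun k => proj1 (Hb k)) Hs).
  - apply (series_le _ _ _ _ Hb Hs H1).
Qed.

Fixpoint law_pgf (g : nat -> nat -> R) (n : nat) (x : R) : R :=
  match n with O => 1 | S m => law_pgf g m (pgf (g (S m)) x) * Hn (S m) x end.

Lemma ln_2_minus_range y : 0 <= y <= 1 -> 0 <= ln (2 - y) <= ln 2.
Proof.
  intro Hy. split.
  - destruct (Req_dec y 1); [subst; replace (2 - 1) with 1 by ring; rewrite ln_1; lra|].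
    left. rewrite <- ln_1. apply ln_increasing; lra.
  - destruct (Req_dec y 0); [subst; rewrite Rminus_0_r; lra|].
    left. apply ln_increasing; lra.
Qed.

Lemma Hn_range k y : (1 <= k)%nat -> 0 <= y <= 1 -> 0 < Hn k y <= 1.
Proof.
  intros Hk Hy. unfold Hn, H. pose proof (ln_2_minus_range y Hy). pose proof ln2_lt_1.
  assert (1 <= INR k) by (apply (le_INR 1); auto).
  replace (1 + (1 - ln (2 - y) - 1) / INR k) with (1 - ln (2 - y) / INR k) by (field; lra).
  assert (0 <= ln (2 - y) / INR k <= ln (2 - y)); [|lra].
  split; [apply Rmult_le_pos; [lra|left; apply Rinv_0_lt_compat; lra]|].
  apply Rmult_le_reg_r with (INR k); [lra|]. unfold Rdiv. rewrite Rmult_assoc, Rinv_l by lra. nra.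
Qed.

Lemma law_pgf_range g n x : (forall m, (1 <= m)%nat -> is_pmf (g m)) -> 0 <= x <= 1 ->
  0 < law_pgf g n x <= 1.
Proof.
  intros Hg. revert x. induction n; intros x Hx; simpl; [lra|].
  destruct (pgf_spec (g (S n)) x (Hg (S n) ltac:(lia)) Hx) as [_ HG].
  destruct (IHn _ HG). destruct (Hn_range (S n) x ltac:(lia) Hx).
  split; [apply Rmult_lt_0_compat; auto|].
  rewrite <- (Rmult_1_r 1). apply Rmult_le_compat; lra.
Qed.

Lemma branching_step_pgf (Lp Ln p e : nat -> R) (Pp : R -> R) x E :
  (forall m, 0 <= Lp m) -> (forall y, 0 <= y <= 1 -> is_series (fun m => Lp m * y ^ m) (Pp y)) ->
  is_pmf p -> (forall k, 0 <= e k) -> 0 <= x <= 1 -> is_series (fun k => e k * x ^ k) E ->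
  (forall k, is_series (fun m => Lp m * conv (convpow p m) e k) (Ln k)) ->
  is_series (fun k => Ln k * x ^ k) (Pp (pgf p x) * E).
Proof.
  intros HLp HPp Hp He Hx HE HLn.
  destruct (pgf_spec p x Hp Hx) as [HGs HGr]. set (G := pgf p x) in *.
  set (c := fun m k => conv (convpow p m) e k).
  assert (Hc0 : forall m k, 0 <= c m k)
    by (intros; apply conv_nonneg; auto; apply convpow_nonneg, Hp).
  assert (Hrow : forall m, is_series (fun k => Lp m * c m k * x ^ k) (Lp m * (G ^ m * E))).
  { intro m.
    assert (Hcm : is_series (fun k => c m k * x ^ k) (G ^ m * E)).
    { unfold c. apply conv_pgf; auto; [apply convpow_nonneg, Hp|lra|].
      apply convpow_pgf; auto; [apply Hp|lra]. }
    apply (is_series_scal_l (V:=R_NormedModule) (Lp m)) in Hcm.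
    eapply is_series_ext; [|apply Hcm].
    intro k. unfold scal; simpl; unfold mult; simpl. rring. }
  assert (Hsum : is_series (fun m => Lp m * (G ^ m * E)) (Pp G * E)).
  { eapply is_series_ext; [|apply (is_series_scal_r E _ _ (HPp G HGr))]. intro m. cbv beta. rring. }
  destruct (tonelli (fun m k => Lp m * c m k * x ^ k) _ _
             (fun m k => Rmult_le_pos _ _ (Rmult_le_pos _ _ (HLp m) (Hc0 m k)) (pow_le _ k (proj1 Hx)))
             Hrow Hsum) as [_ HT].
  eapply is_series_ext; [|apply HT]. intro k. cbv beta.
  apply is_series_unique, is_series_scal_r, HLn.
Qed.

Lemma bpi_law_pgf g e L :
  (forall n, (1 <= n)%nat -> is_pmf (g n)) ->
  (forall n, (1 <= n)%nat -> is_pmf (e n) /\ has_pgf (e n) (Hn n)) ->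
  bpi_laws g e L ->
  forall n, (forall k, 0 <= L n k) /\
    (forall x, 0 <= x <= 1 -> is_series (fun k => L n k * x ^ k) (law_pgf g n x)).
Proof.
  intros Hg He [HL0 HL]. induction n as [|n [IH0 IH]].
  - rewrite HL0. split; [intro k; destruct k; simpl; lra|]. intros x Hx. apply delta0_pgf.
  - assert (Hg' := Hg (S n) ltac:(lia)). destruct (He (S n) ltac:(lia)) as [[He0 _] He1].
    assert (HLS : forall k, is_series (fun m => L n m * conv (convpow (g (S n)) m) (e (S n)) k)
                                      (L (S n) k)).
    { intro k. apply is_series_Reals. specialize (HL (S n) k ltac:(lia)).
      replace (S n - 1)%nat with n in HL by lia. apply HL. }
    split.
    + intro k. refine (series_nonneg _ _ _ (HLS k)). intro m.
      apply Rmult_le_pos; [apply IH0|apply conv_nonneg; auto; apply convpow_nonneg, Hg'].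
    + intros x Hx. apply (branching_step_pgf (L n) _ _ (e (S n))); auto.
      apply is_series_Reals, He1; auto.
Qed.

(** * Bounds on offspring generating functions near 1 *)

Lemma ln_le_sub1 u : 0 < u -> ln u <= u - 1.
Proof.
  intro Hu. rewrite <- (ln_exp (u - 1)).
  destruct (Req_dec u (exp (u - 1))) as [E|NE]; [rewrite <- E; lra|].
  left. apply ln_increasing; auto. pose proof (exp_ineq1_le (u - 1)). lra.
Qed.

Lemma ln_ge_1_sub_inv u : 0 < u -> 1 - / u <= ln u.
Proof.
  intro Hu. pose proof (ln_le_sub1 (/ u) (Rinv_0_lt_compat _ Hu)).
  rewrite ln_Rinv in H by auto. lra.
Qed.

Lemma bernoulli_lower w k : 0 <= w <= 1 -> 1 - INR k * w <= (1 - w) ^ k.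
Proof.
  intro Hw. induction k; [simpl; lra|].
  rewrite S_INR. simpl pow.
  assert ((1 - w) * (1 - INR k * w) <= (1 - w) * (1 - w) ^ k) by (apply Rmult_le_compat_l; lra).
  assert (0 <= INR k) by apply pos_INR. nra.
Qed.

Lemma bernoulli_upper w k : 0 <= w <= 1 ->
  (1 - w) ^ k <= 1 - INR k * w + INR k * (INR k - 1) / 2 * w ^ 2.
Proof.
  intro Hw. induction k; [simpl; lra|].
  rewrite S_INR. simpl pow. simpl pow in IHk.
  assert ((1 - w) * (1 - w) ^ k <= (1 - w) * (1 - INR k * w + INR k * (INR k - 1) / 2 * (w * (w * 1))))
    by (apply Rmult_le_compat_l; lra).
  assert (Hk : 0 <= INR k * (INR k - 1)).
  { destruct k; [simpl; lra|]. rewrite S_INR. pose proof (pos_INR k). apply Rmult_le_pos; lra. }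
  assert (0 <= INR k * (INR k - 1) / 2 * (w * w * w)) by (apply Rmult_le_pos; [lra|repeat apply Rmult_le_pos; lra]).
  assert (E : (1 - (INR k + 1) * w + (INR k + 1) * (INR k + 1 - 1) / 2 * (w * (w * 1)))
     - (1 - w) * (1 - INR k * w + INR k * (INR k - 1) / 2 * (w * (w * 1)))
     = INR k * (INR k - 1) / 2 * (w * w * w)) by field.
  lra.
Qed.

Definition pgf_remainder (p : nat -> R) (r y : R) : R := pgf p y - 1 + r * (1 - y).

Lemma pgf_remainder_series p y r : is_pmf p -> infinite_sum (fun k => INR k * p k) r -> 0 <= y <= 1 ->
  is_series (fun k => p k * (y ^ k - 1 + INR k * (1 - y))) (pgf_remainder p r y).
Proof.
  intros Hp Hr Hy. destruct (pgf_spec p y Hp Hy) as [HG _].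
  pose proof (pmf_series _ Hp) as H1. apply is_series_Reals in Hr.
  pose proof (is_series_minus (V:=R_NormedModule) _ _ _ _ HG H1) as H2.
  pose proof (is_series_scal_r (1 - y) _ _ Hr) as H3.
  pose proof (is_series_plus (V:=R_NormedModule) _ _ _ _ H2 H3) as H4.
  eapply is_series_ext; [|apply H4]. intro k. unfold plus, opp; simpl. rring.
Qed.

(* Convexity: G(y) >= 1 - G'(1) (1 - y). *)
Lemma pgf_remainder_nonneg p y r : is_pmf p -> infinite_sum (fun k => INR k * p k) r -> 0 <= y <= 1 ->
  0 <= pgf_remainder p r y.
Proof.
  intros Hp Hr Hy. apply (series_nonneg (fun k => p k * (y ^ k - 1 + INR k * (1 - y)))).
  - intro k. apply Rmult_le_pos; [apply Hp|]. pose proof (bernoulli_lower (1 - y) k ltac:(lra)).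
    replace (1 - (1 - y)) with y in H by ring. lra.
  - apply pgf_remainder_series; auto.
Qed.

Lemma pgf_remainder_le p y r s : is_pmf p -> infinite_sum (fun k => INR k * p k) r ->
  infinite_sum (fun k => INR k * (INR k - 1) * p k) s -> 0 <= y <= 1 ->
  pgf_remainder p r y <= s * ((1 - y) ^ 2 / 2).
Proof.
  intros Hp Hr Hs Hy.
  apply (series_le (fun k => p k * (y ^ k - 1 + INR k * (1 - y)))
                   (fun k => INR k * (INR k - 1) * p k * ((1 - y) ^ 2 / 2))).
  - intro k. pose proof (bernoulli_lower (1 - y) k ltac:(lra)).
    pose proof (bernoulli_upper (1 - y) k ltac:(lra)).
    replace (1 - (1 - y)) with y in * by ring.
    assert (0 <= p k) by apply Hp.
    split; [apply Rmult_le_pos; lra|].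
    replace (INR k * (INR k - 1) * p k * ((1 - y) ^ 2 / 2))
      with (p k * (INR k * (INR k - 1) / 2 * (1 - y) ^ 2)) by field.
    apply Rmult_le_compat_l; lra.
  - apply pgf_remainder_series; auto.
  - apply is_series_scal_r, is_series_Reals; auto.
Qed.

Lemma factorial_moment_nonneg (p : nat -> R) (s : R) : is_pmf p ->
  infinite_sum (fun k => INR k * (INR k - 1) * p k) s -> 0 <= s.
Proof.
  intros Hp Hs. apply is_series_Reals in Hs.
  apply (series_nonneg (fun k => INR k * (INR k - 1) * p k)); auto.
  intro k. apply Rmult_le_pos; [|apply Hp]. destruct k; [simpl; lra|].
  rewrite S_INR. pose proof (pos_INR k). apply Rmult_le_pos; lra.
Qed.

Lemma rho_S m : rho (S m) = INR m / INR (S m).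
Proof. unfold rho. rewrite S_INR. field. pose proof (pos_INR m). lra. Qed.

Lemma rho_range n : (1 <= n)%nat -> 0 <= rho n <= 1.
Proof.
  intro Hn. destruct n; [lia|]. rewrite rho_S. pose proof (pos_INR n). rewrite S_INR.
  split; [apply Rmult_le_pos; [lra|left; apply Rinv_0_lt_compat; lra]|].
  apply Rmult_le_reg_r with (INR n + 1); [lra|]. unfold Rdiv. rewrite Rmult_assoc, Rinv_l by lra. lra.
Qed.

(* The contraction 1 - G_{n+1}(y) <= rho_{n+1} (1 - y) = n/(n+1) (1 - y), rescaled by j/n. *)
Lemma contraction_rescale n j w w' : (1 <= n)%nat ->
  w' <= INR n / INR (S n) * w -> w' * INR j / INR n <= w * INR j / INR (S n).
Proof.
  intros Hn Hw. assert (0 < INR n) by (apply lt_0_INR; lia).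
  assert (0 < INR (S n)) by (apply lt_0_INR; lia). pose proof (pos_INR j).
  apply Rle_trans with ((INR n / INR (S n) * w) * (INR j / INR n)).
  - replace (w' * INR j / INR n) with (w' * (INR j / INR n)) by (unfold Rdiv; ring).
    apply Rmult_le_compat_r; [|lra].
    apply Rmult_le_pos; [lra|left; apply Rinv_0_lt_compat; lra].
  - right. field. lra.
Qed.

(** * The logarithm of P_n as a sum over generations *)

Section Iterates.

Variable g : nat -> nat -> R.
Hypothesis g_pmf : forall m, (1 <= m)%nat -> is_pmf (g m).
Hypothesis g_mean : forall m, (1 <= m)%nat -> infinite_sum (fun k => INR k * g m k) (rho m).

(* Phi_{k,n}(y) = G_{k+1}(... G_n(y)), the identity when k >= n. *)
Fixpoint iter_pgf (k n : nat) (y : R) : R :=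
  match n with O => y | S m => if (k <=? m)%nat then iter_pgf k m (pgf (g (S m)) y) else y end.

Lemma iter_pgf_unfold k m y :
  iter_pgf k (S m) y = if (k <=? m)%nat then iter_pgf k m (pgf (g (S m)) y) else y.
Proof. reflexivity. Qed.

Lemma iter_pgf_top n y : iter_pgf n n y = y.
Proof.
  destruct n; [reflexivity|]. rewrite iter_pgf_unfold.
  destruct (S n <=? n)%nat eqn:E; auto. apply Nat.leb_le in E. lia.
Qed.

Lemma iter_pgf_S k m y : (k <= m)%nat -> iter_pgf k (S m) y = iter_pgf k m (pgf (g (S m)) y).
Proof.
  intro H. rewrite iter_pgf_unfold. destruct (k <=? m)%nat eqn:E; auto.
  apply Nat.leb_gt in E. lia.
Qed.

Lemma iter_pgf_range k n y : 0 <= y <= 1 -> 0 <= iter_pgf k n y <= 1.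
Proof.
  revert y. induction n; intros y Hy; [simpl; auto|]. rewrite iter_pgf_unfold.
  destruct (k <=? n)%nat; auto. apply IHn, (pgf_spec (g (S n)) y); auto. apply g_pmf; lia.
Qed.

Lemma pgf_contraction n y : 0 <= y <= 1 ->
  1 - pgf (g (S n)) y <= INR n / INR (S n) * (1 - y).
Proof.
  intro Hy. pose proof (pgf_remainder_nonneg (g (S n)) y (rho (S n))
                          (g_pmf (S n) ltac:(lia)) (g_mean (S n) ltac:(lia)) Hy) as HL.
  unfold pgf_remainder in HL. rewrite rho_S in HL. lra.
Qed.

(* 1 - Phi_{k,n}(y) <= (1 - y) k/n: mean-rho_j offspring contract distances to 1. *)
Lemma iter_pgf_gap_bound k n y : (1 <= k <= n)%nat -> 0 <= y <= 1 ->
  1 - iter_pgf k n y <= (1 - y) * INR k / INR n.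
Proof.
  revert y. induction n; intros y Hk Hy; [lia|].
  destruct (Nat.eq_dec k (S n)) as [->|Hne].
  - rewrite iter_pgf_top. assert (INR (S n) <> 0) by (apply not_0_INR; lia). right; field; auto.
  - rewrite iter_pgf_S by lia.
    destruct (pgf_spec (g (S n)) y (g_pmf (S n) ltac:(lia)) Hy) as [_ HG].
    eapply Rle_trans; [apply IHn; auto; lia|].
    apply contraction_rescale; [lia|]. apply pgf_contraction; auto.
Qed.

Definition log_law_sum (n : nat) (y : R) : R := sum1 (fun k => ln (Hn k (iter_pgf k n y))) n.

Lemma ln_law_pgf n y : 0 <= y <= 1 -> ln (law_pgf g n y) = log_law_sum n y.
Proof.
  revert y. induction n; intros y Hy; [apply ln_1|].
  simpl law_pgf. destruct (pgf_spec (g (S n)) y (g_pmf (S n) ltac:(lia)) Hy) as [_ HG].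
  rewrite ln_mult.
  - rewrite IHn by auto. unfold log_law_sum. rewrite sum1_S, iter_pgf_top.
    f_equal. apply sum1_ext. intros k Hk. rewrite iter_pgf_S by lia. reflexivity.
  - apply law_pgf_range; auto.
  - apply Hn_range; auto. lia.
Qed.

(* (1 - y) - sum_{k<=n} (1 - Phi_{k,n}(y))/k: how far the gaps fall short of the linear
   prediction (1 - y) k/n; it accumulates the second order remainders of the G_j. *)
Definition gap_defect (n : nat) (y : R) : R :=
  (1 - y) - sum1 (fun k => (1 - iter_pgf k n y) / INR k) n.

Lemma gap_defect_S m y :
  gap_defect (S m) y = pgf_remainder (g (S m)) (rho (S m)) y + gap_defect m (pgf (g (S m)) y).
Proof.
  unfold gap_defect, pgf_remainder. rewrite sum1_S, iter_pgf_top.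
  rewrite (sum1_ext _ (fun k => (1 - iter_pgf k m (pgf (g (S m)) y)) / INR k) m)
    by (intros k Hk; rewrite iter_pgf_S by lia; reflexivity).
  rewrite rho_S, S_INR. field. pose proof (pos_INR m). lra.
Qed.

End Iterates.

(* Majorant of the remainder of G_j at distance v from 1: s_j v^2 once the second
   factorial moment s_j is available (j >= N), and the trivial bound v before. *)
Definition remainder_majorant (N : nat) (s : nat -> R) (j : nat) (v : R) : R :=
  if (N <=? j)%nat then s j * v ^ 2 else v.

Definition majorant_sum N s n w := sum1 (fun j => remainder_majorant N s j (w * INR j / INR n)) n.

Lemma remainder_majorant_nonneg N s j v : ((N <= j)%nat -> 0 <= s j) -> 0 <= v ->
  0 <= remainder_majorant N s j v.
Proof.
  intros Hs Hv. unfold remainder_majorant. destruct (N <=? j)%nat eqn:E; auto.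
  apply Nat.leb_le in E. apply Rmult_le_pos; auto. apply pow_le; auto.
Qed.

Lemma remainder_majorant_mono N s j v v' : ((N <= j)%nat -> 0 <= s j) -> 0 <= v <= v' ->
  remainder_majorant N s j v <= remainder_majorant N s j v'.
Proof.
  intros Hs Hv. unfold remainder_majorant. destruct (N <=? j)%nat eqn:E; [|lra].
  apply Nat.leb_le in E. apply Rmult_le_compat_l; auto. apply pow_incr; auto.
Qed.

Section Remainders.

Variable g : nat -> nat -> R.
Variables (N : nat) (s : nat -> R).
Hypothesis g_pmf : forall m, (1 <= m)%nat -> is_pmf (g m).
Hypothesis g_mean : forall m, (1 <= m)%nat -> infinite_sum (fun k => INR k * g m k) (rho m).
Hypothesis g_var : forall n, (N <= n)%nat -> infinite_sum (fun k => INR k * (INR k - 1) * g n k) (s n).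

Lemma s_nonneg j : (1 <= j)%nat -> (N <= j)%nat -> 0 <= s j.
Proof. intros Hj HN. apply (factorial_moment_nonneg (g j)); auto. Qed.

Lemma pgf_remainder_majorant j y : (1 <= j)%nat -> 0 <= y <= 1 ->
  pgf_remainder (g j) (rho j) y <= remainder_majorant N s j (1 - y).
Proof.
  intros Hj Hy. unfold remainder_majorant. destruct (N <=? j)%nat eqn:E.
  - apply Nat.leb_le in E. eapply Rle_trans; [apply (pgf_remainder_le (g j) y (rho j) (s j)); auto|].
    pose proof (s_nonneg j Hj E). assert (0 <= (1 - y) ^ 2) by (apply pow_le; lra). nra.
  - unfold pgf_remainder. destruct (pgf_spec (g j) y (g_pmf j Hj) Hy).
    pose proof (rho_range j Hj). nra.
Qed.

Lemma majorant_sum_contract m y : (1 <= m)%nat -> 0 <= y <= 1 ->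
  majorant_sum N s m (1 - pgf (g (S m)) y)
    <= sum1 (fun j => remainder_majorant N s j ((1 - y) * INR j / INR (S m))) m.
Proof.
  intros Hm Hy. destruct (pgf_spec (g (S m)) y (g_pmf (S m) ltac:(lia)) Hy) as [_ HG].
  unfold majorant_sum. apply sum1_le. intros j Hj.
  apply remainder_majorant_mono; [intro; apply s_nonneg; lia|]. split.
  - assert (0 < INR m) by (apply lt_0_INR; lia). pose proof (pos_INR j).
    unfold Rdiv. apply Rmult_le_pos; [apply Rmult_le_pos; lra|left; apply Rinv_0_lt_compat; lra].
  - apply contraction_rescale; auto. apply pgf_contraction; auto.
Qed.

Lemma gap_defect_bound n y : (1 <= n)%nat -> 0 <= y <= 1 ->
  gap_defect g n y <= majorant_sum N s n (1 - y).
Proof.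
  revert y. induction n as [|m IH]; intros y Hn Hy; [lia|].
  destruct m as [|m].
  - assert (E : gap_defect g 1 y = 0).
    { unfold gap_defect. rewrite sum1_S, iter_pgf_top. simpl. field. }
    rewrite E. unfold majorant_sum. apply sum1_nonneg. intros k Hk.
    apply remainder_majorant_nonneg; [intro; apply s_nonneg; lia|].
    replace k with 1%nat by lia. simpl. lra.
  - rewrite gap_defect_S by auto.
    destruct (pgf_spec (g (S (S m))) y (g_pmf (S (S m)) ltac:(lia)) Hy) as [_ HG].
    pose proof (pgf_remainder_majorant (S (S m)) y ltac:(lia) Hy) as HR.
    pose proof (IH _ ltac:(lia) HG) as HI.
    pose proof (majorant_sum_contract (S m) y ltac:(lia) Hy) as HC.
    unfold majorant_sum in HI, HC |- *. rewrite sum1_S.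
    replace ((1 - y) * INR (S (S m)) / INR (S (S m))) with (1 - y) by (field; apply not_0_INR; lia).
    lra.
Qed.

End Remainders.

(** * Comparing ln P_n(x) with -T_n(1 - x) *)

Definition log_error_const : R := / (1 - ln 2).

Lemma ln_one_minus_error a : 0 <= a <= ln 2 -> Rabs (ln (1 - a) + a) <= log_error_const * a ^ 2.
Proof.
  intro Ha. pose proof ln2_lt_1.
  assert (Hup : ln (1 - a) + a <= 0) by (pose proof (ln_le_sub1 (1 - a)); lra).
  assert (Hlo : - (a * a / (1 - a)) <= ln (1 - a) + a).
  { pose proof (ln_ge_1_sub_inv (1 - a) ltac:(lra)).
    replace (- (a * a / (1 - a))) with (1 - / (1 - a) + a) by (field; lra). lra. }
  rewrite Rabs_left1 by auto. simpl. rewrite Rmult_1_r.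
  assert (a * a / (1 - a) <= log_error_const * (a * a)); [|lra].
  unfold log_error_const, Rdiv. rewrite Rmult_comm. apply Rmult_le_compat_r; [nra|].
  apply Rinv_le_contravar; lra.
Qed.

Lemma ln_increment_bound w b : 0 <= w <= b -> 0 <= ln (1 + b) - ln (1 + w) <= b - w.
Proof.
  intro Hwb. split.
  - destruct (Req_dec w b); [subst; lra|].
    assert (ln (1 + w) < ln (1 + b)) by (apply ln_increasing; lra). lra.
  - rewrite <- ln_div by lra.
    pose proof (ln_le_sub1 ((1 + b) / (1 + w)) ltac:(apply Rdiv_lt_0_compat; lra)).
    assert ((1 + b) / (1 + w) - 1 <= b - w); [|lra].
    apply Rmult_le_reg_r with (1 + w); [lra|]. unfold Rdiv.
    replace (((1 + b) * / (1 + w) - 1) * (1 + w)) with (b - w) by (field; lra). nra.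
Qed.

Lemma log_Hn_term_error k n t w : (1 <= k <= n)%nat -> 0 <= t < 1 ->
  0 <= w <= t * INR k / INR n ->
  Rabs (ln (Hn k (1 - w)) + ln (1 + t * INR k / INR n) / INR k)
    <= log_error_const * (t / INR n) ^ 2 + (t * INR k / INR n - w) / INR k.
Proof.
  intros Hk Ht Hw.
  assert (Hk1 : 1 <= INR k) by (apply (le_INR 1); lia).
  assert (Hkn : INR k <= INR n) by (apply le_INR; lia).
  set (b := t * INR k / INR n) in *.
  assert (Hb1 : b <= t).
  { unfold b. apply Rmult_le_reg_r with (INR n); [lra|]. unfold Rdiv.
    rewrite Rmult_assoc, Rinv_l by lra. nra. }
  assert (E1 : Hn k (1 - w) = 1 - ln (1 + w) / INR k).
  { unfold Hn, H. replace (2 - (1 - w)) with (1 + w) by ring. field. lra. }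
  rewrite E1. set (a := ln (1 + w) / INR k).
  assert (Hlw : 0 <= ln (1 + w) <= w).
  { split; [|pose proof (ln_le_sub1 (1 + w)); lra].
    replace (ln (1 + w)) with (ln (1 + w) - ln (1 + 0)) by (rewrite Rplus_0_r, ln_1; ring).
    apply ln_increment_bound; lra. }
  assert (Hkinv : 0 < / INR k <= 1) by (split; [apply Rinv_0_lt_compat; lra|rewrite <- Rinv_1; apply Rinv_le_contravar; lra]).
  assert (Ha : 0 <= a <= w / INR k) by (unfold a, Rdiv; split; [apply Rmult_le_pos|apply Rmult_le_compat_r]; lra).
  assert (Hwk : w / INR k <= t / INR n).
  { apply Rmult_le_reg_r with (INR k); [lra|]. unfold Rdiv. rewrite Rmult_assoc, Rinv_l by lra.
    unfold b, Rdiv in Hw. lra. }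
  assert (Hln2 : a <= ln 2).
  { apply Rle_trans with (ln (1 + w)); [unfold a, Rdiv; nra|].
    replace (ln 2) with (ln (1 + 1)) by (f_equal; ring).
    pose proof (ln_increment_bound w 1 ltac:(lra)). lra. }
  pose proof (ln_one_minus_error a ltac:(lra)) as Herr1.
  assert (a ^ 2 <= (t / INR n) ^ 2) by (apply pow_incr; lra).
  assert (0 < log_error_const) by (unfold log_error_const; apply Rinv_0_lt_compat; pose proof ln2_lt_1; lra).
  pose proof (ln_increment_bound w b ltac:(lra)) as Herr2.
  replace (ln (1 - a) + ln (1 + b) / INR k) with ((ln (1 - a) + a) + (ln (1 + b) - ln (1 + w)) / INR k)
    by (unfold a; field; lra).
  eapply Rle_trans; [apply Rabs_triang|]. apply Rplus_le_compat; [nra|].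
  rewrite Rabs_pos_eq; unfold Rdiv; [apply Rmult_le_compat_r|apply Rmult_le_pos]; lra.
Qed.

Lemma log_law_sum_error g x n : (forall m, (1 <= m)%nat -> is_pmf (g m)) ->
  (forall m, (1 <= m)%nat -> infinite_sum (fun k => INR k * g m k) (rho m)) ->
  0 < x < 1 -> (1 <= n)%nat ->
  Rabs (log_law_sum g n x + log_riemann (1 - x) n)
    <= log_error_const * (1 - x) ^ 2 / INR n + gap_defect g n x.
Proof.
  intros Hg Hm Hx Hn.
  assert (Hn0 : 0 < INR n) by (apply lt_0_INR; lia).
  unfold log_law_sum, log_riemann. rewrite <- sum1_plus.
  eapply Rle_trans; [apply sum1_abs|].
  eapply Rle_trans.
  - apply sum1_le with (G := fun k => log_error_const * ((1 - x) / INR n) ^ 2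
                                 + ((1 - x) * INR k / INR n - (1 - iter_pgf g k n x)) / INR k).
    intros k Hk. replace (iter_pgf g k n x) with (1 - (1 - iter_pgf g k n x)) at 1 by ring.
    apply log_Hn_term_error; auto; [lra|].
    pose proof (iter_pgf_range g Hg k n x ltac:(lra)).
    pose proof (iter_pgf_gap_bound g Hg Hm k n x Hk ltac:(lra)). lra.
  - rewrite sum1_plus, sum1_const. unfold gap_defect.
    rewrite (sum1_ext _ (fun k => (1 - x) / INR n - (1 - iter_pgf g k n x) / INR k)).
    + rewrite sum1_minus, sum1_const. right. field. lra.
    + intros k Hk. assert (0 < INR k) by (apply lt_0_INR; lia). field. lra.
Qed.

(** * The accumulated remainders vanish when n G_n''(1) -> 0 *)

Lemma sum1_le_support c n M : (forall j, 0 <= c j) -> (forall j, (M < j)%nat -> c j = 0) ->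
  sum1 c n <= sum1 c M.
Proof.
  intros H0 HM. induction n; [apply sum1_nonneg; auto|].
  destruct (le_lt_dec (S n) M); [apply sum1_mono; auto|].
  rewrite sum1_S, HM by lia. lra.
Qed.

Lemma majorant_term_late N s j n v e : (N <= j)%nat -> 0 <= s j -> s j * INR j <= e ->
  (1 <= j <= n)%nat -> 0 <= v <= INR j / INR n -> remainder_majorant N s j v <= e / INR n.
Proof.
  intros HNj Hs0 Hse Hjn Hv. unfold remainder_majorant.
  replace (N <=? j)%nat with true by (symmetry; apply Nat.leb_le; auto).
  assert (Hn0 : 0 < INR n) by (apply lt_0_INR; lia).
  assert (Hjn' : INR j <= INR n) by (apply le_INR; lia).
  assert (Hj1 : 1 <= INR j) by (apply (le_INR 1); lia).
  assert (Hjn1 : 0 <= INR j / INR n <= 1).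
  { unfold Rdiv. split; [apply Rmult_le_pos; [lra|left; apply Rinv_0_lt_compat; lra]|].
    apply Rmult_le_reg_r with (INR n); [lra|]. rewrite Rmult_assoc, Rinv_l by lra. lra. }
  assert (Hninv : 0 < / INR n) by (apply Rinv_0_lt_compat; lra).
  assert (Hv2 : v ^ 2 <= INR j * (INR j / INR n * / INR n)).
  { apply Rle_trans with ((INR j / INR n) ^ 2); [apply pow_incr; lra|].
    right. unfold Rdiv. ring. }
  apply Rle_trans with (s j * INR j * (INR j / INR n * / INR n)).
  { rewrite Rmult_assoc. apply Rmult_le_compat_l; auto. }
  apply Rle_trans with (e * (INR j / INR n * / INR n)).
  { apply Rmult_le_compat_r; [apply Rmult_le_pos|]; lra. }
  assert (0 <= e) by (pose proof (Rmult_le_pos _ _ Hs0 (pos_INR j)); lra).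
  unfold Rdiv at 2. apply Rmult_le_compat_l; auto.
  rewrite <- (Rmult_1_l (/ INR n)) at 2. apply Rmult_le_compat_r; lra.
Qed.

Lemma majorant_term_early N s j v : ((N <= j)%nat -> 0 <= s j) -> 0 <= v <= 1 ->
  remainder_majorant N s j v <= (1 + Rabs (s j)) * v.
Proof.
  intros Hs Hv. pose proof (Rabs_pos (s j)). unfold remainder_majorant.
  destruct (N <=? j)%nat eqn:E; [|nra].
  apply Nat.leb_le in E. specialize (Hs E). rewrite Rabs_pos_eq by auto.
  assert (v ^ 2 <= v) by (simpl; nra).
  assert (s j * v ^ 2 <= s j * v) by (apply Rmult_le_compat_l; auto). nra.
Qed.

(* Weight absorbing the finitely many early terms j < M. *)
Definition early_weight (s : nat -> R) (M j : nat) : R :=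
  if (j <? M)%nat then (1 + Rabs (s j)) * INR M else 0.

Lemma early_weight_nonneg s M j : 0 <= early_weight s M j.
Proof.
  unfold early_weight. destruct (j <? M)%nat; [|lra].
  apply Rmult_le_pos; [pose proof (Rabs_pos (s j)); lra|apply pos_INR].
Qed.

Lemma majorant_term_bound N s t M e n j : 0 <= t <= 1 ->
  (forall j, (1 <= j)%nat -> (N <= j)%nat -> 0 <= s j) -> (N <= M)%nat ->
  (forall j, (M <= j)%nat -> s j * INR j <= e) -> 0 <= e -> (1 <= j <= n)%nat ->
  remainder_majorant N s j (t * INR j / INR n) <= e / INR n + early_weight s M j / INR n.
Proof.
  intros Ht Hs0 HNM Hlate He Hj.
  assert (Hn0 : 0 < INR n) by (apply lt_0_INR; lia).
  assert (Hjn : INR j <= INR n) by (apply le_INR; lia).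
  pose proof (pos_INR j).
  assert (Hv : 0 <= t * INR j / INR n <= INR j / INR n).
  { unfold Rdiv. split; [apply Rmult_le_pos; [nra|left; apply Rinv_0_lt_compat; lra]|].
    apply Rmult_le_compat_r; [left; apply Rinv_0_lt_compat|]; nra. }
  assert (Hv1 : INR j / INR n <= 1).
  { apply Rmult_le_reg_r with (INR n); auto. unfold Rdiv. rewrite Rmult_assoc, Rinv_l by lra. lra. }
  assert (Hen : 0 <= e / INR n) by (apply Rmult_le_pos; [lra|left; apply Rinv_0_lt_compat; lra]).
  unfold early_weight. destruct (j <? M)%nat eqn:EjM.
  - apply Nat.ltb_lt in EjM. assert (HjM : INR j <= INR M) by (apply le_INR; lia).
    eapply Rle_trans; [apply majorant_term_early; [intro; apply Hs0; lia|lra]|].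
    assert (INR j / INR n <= INR M / INR n)
      by (unfold Rdiv; apply Rmult_le_compat_r; [left; apply Rinv_0_lt_compat|]; lra).
    replace ((1 + Rabs (s j)) * INR M / INR n) with ((1 + Rabs (s j)) * (INR M / INR n))
      by (unfold Rdiv; ring).
    pose proof (Rabs_pos (s j)). apply Rle_trans with ((1 + Rabs (s j)) * (INR M / INR n)); [|lra].
    apply Rmult_le_compat_l; lra.
  - apply Nat.ltb_ge in EjM.
    replace (0 / INR n) with 0 by (unfold Rdiv; ring). rewrite Rplus_0_r.
    apply majorant_term_late; auto; [lia|apply Hs0; lia].
Qed.

Lemma majorant_sum_lim N s t : 0 <= t <= 1 ->
  (forall j, (1 <= j)%nat -> (N <= j)%nat -> 0 <= s j) ->
  Un_cv (fun n => s n * INR n) 0 -> Un_cv (fun n => majorant_sum N s n t) 0.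
Proof.
  intros Ht Hs0 Hs eps Heps.
  destruct (Hs (eps / 2)) as [M0 HM0]; [lra|].
  set (M := max (max M0 N) 1).
  assert (Hlate : forall j, (M <= j)%nat -> s j * INR j <= eps / 2).
  { intros j Hj. specialize (HM0 j ltac:(lia)). unfold R_dist in HM0.
    rewrite Rminus_0_r in HM0. pose proof (Rle_abs (s j * INR j)). lra. }
  set (K := sum1 (early_weight s M) M).
  assert (HK0 : 0 <= K) by (apply sum1_nonneg; intros; apply early_weight_nonneg).
  destruct (archimed_cor1 (eps / (2 * (K + 1)))) as [N1 [HN1 HN1p]].
  { apply Rdiv_lt_0_compat; lra. }
  exists N1. intros n Hn. unfold R_dist. rewrite Rminus_0_r.
  assert (Hn0 : 0 < INR n) by (apply lt_0_INR; lia).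
  assert (HB0 : 0 <= majorant_sum N s n t).
  { apply sum1_nonneg. intros j Hj. apply remainder_majorant_nonneg; [intro; apply Hs0; lia|].
    apply Rmult_le_pos; [apply Rmult_le_pos; [lra|apply pos_INR]|left; apply Rinv_0_lt_compat; lra]. }
  rewrite Rabs_pos_eq by auto.
  assert (HcK : sum1 (early_weight s M) n <= K).
  { apply sum1_le_support; [apply early_weight_nonneg|]. intros j Hj. unfold early_weight.
    replace (j <? M)%nat with false; auto. symmetry; apply Nat.ltb_ge; lia. }
  assert (Hsum : majorant_sum N s n t <= eps / 2 + / INR n * K).
  { unfold majorant_sum. eapply Rle_trans.
    { apply sum1_le. intros j Hj. apply (majorant_term_bound N s t M (eps / 2)); auto; [lia|lra]. }
    rewrite sum1_plus, sum1_const.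
    rewrite (sum1_ext (fun j => early_weight s M j / INR n) (fun j => / INR n * early_weight s M j))
      by (intros; unfold Rdiv; ring).
    rewrite sum1_scal. replace (INR n * (eps / 2 / INR n)) with (eps / 2) by (field; lra).
    apply Rplus_le_compat_l, Rmult_le_compat_l; [left; apply Rinv_0_lt_compat|]; lra. }
  assert (HnN : / INR n <= / INR N1) by (apply Rinv_le_contravar; [apply lt_0_INR; lia|apply le_INR; lia]).
  assert (/ INR n * K < eps / 2); [|lra].
  apply Rle_lt_trans with (eps / (2 * (K + 1)) * K); [apply Rmult_le_compat_r; lra|].
  apply Rmult_lt_reg_r with (2 * (K + 1)); [lra|].
  replace (eps / (2 * (K + 1)) * K * (2 * (K + 1))) with (eps * K) by (field; lra). nra.
Qed.

Lemma Un_cv_approx (u v e : nat -> R) l : Un_cv u l -> Un_cv e 0 ->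
  (exists N, forall n, (N <= n)%nat -> Rabs (v n - u n) <= e n) -> Un_cv v l.
Proof.
  intros Hu He [N HN] eps Heps.
  destruct (Hu (eps / 2)) as [N1 H1]; [lra|]. destruct (He (eps / 2)) as [N2 H2]; [lra|].
  exists (max N (max N1 N2)). intros n Hn.
  specialize (H1 n ltac:(lia)). specialize (H2 n ltac:(lia)). specialize (HN n ltac:(lia)).
  unfold R_dist in *. rewrite Rminus_0_r in H2.
  replace (v n - l) with ((v n - u n) + (u n - l)) by ring.
  eapply Rle_lt_trans; [apply Rabs_triang|]. pose proof (Rle_abs (e n)). lra.
Qed.

Lemma Un_cv_const_div_n c : Un_cv (fun n => c / INR n) 0.
Proof.
  intros eps Heps.
  destruct (archimed_cor1 (eps / (Rabs c + 1))) as [N [HN HN0]].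
  { apply Rdiv_lt_0_compat; [lra|pose proof (Rabs_pos c); lra]. }
  exists N. intros n Hn. unfold R_dist. rewrite Rminus_0_r.
  assert (0 < INR n) by (apply lt_0_INR; lia).
  unfold Rdiv. rewrite Rabs_mult, Rabs_inv, (Rabs_pos_eq (INR n)) by lra.
  assert (/ INR n <= / INR N) by (apply Rinv_le_contravar; [apply lt_0_INR; lia|apply le_INR; lia]).
  assert (0 < / INR n) by (apply Rinv_0_lt_compat; lra).
  pose proof (Rabs_pos c).
  apply Rle_lt_trans with ((Rabs c + 1) * / INR N); [apply Rmult_le_compat; lra|].
  apply Rmult_lt_reg_l with (/ (Rabs c + 1)); [apply Rinv_0_lt_compat; lra|].
  rewrite <- Rmult_assoc, Rinv_l by lra. unfold Rdiv in HN. lra.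
Qed.

Lemma law_pgf_lim g N s x :
  (forall m, (1 <= m)%nat -> is_pmf (g m)) ->
  (forall m, (1 <= m)%nat -> infinite_sum (fun k => INR k * g m k) (rho m)) ->
  (forall n, (N <= n)%nat -> infinite_sum (fun k => INR k * (INR k - 1) * g n k) (s n)) ->
  Un_cv (fun n => s n * INR n) 0 -> 0 < x < 1 ->
  Un_cv (fun n => law_pgf g n x) (exp (PSeries dilog_coef (x - 1))).
Proof.
  intros Hg Hm HsN Hs Hx.
  assert (HLP : Un_cv (fun n => log_law_sum g n x) (PSeries dilog_coef (x - 1))).
  { apply Un_cv_approx with (u := fun n => - log_riemann (1 - x) n)
      (e := fun n => log_error_const * (1 - x) ^ 2 / INR n + majorant_sum N s n (1 - x)).
    - replace (PSeries dilog_coef (x - 1)) with (- - PSeries dilog_coef (x - 1)) by ring.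
      apply CV_opp, log_riemann_lim; auto.
    - replace 0 with (0 + 0) by ring. apply CV_plus; [apply Un_cv_const_div_n|].
      apply majorant_sum_lim; [lra| |auto]. intros j Hj HN. apply (s_nonneg g N s); auto.
    - exists 1%nat. intros n Hn.
      replace (log_law_sum g n x - - log_riemann (1 - x) n)
        with (log_law_sum g n x + log_riemann (1 - x) n) by ring.
      eapply Rle_trans; [apply log_law_sum_error; auto|].
      pose proof (gap_defect_bound g N s Hg Hm HsN n x Hn ltac:(lra)). lra. }
  apply Un_cv_eventually_eq with (fun n => exp (log_law_sum g n x)) O.
  - intros n _. rewrite <- ln_law_pgf by (auto; lra). apply exp_ln, law_pgf_range; auto. lra.
  - apply continuity_seq; auto. apply derivable_continuous_pt, derivable_pt_exp.
Qed.

(** * A continuity theorem for generating functions *)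

Lemma partial_sum_mono (f : nat -> R) m n : (forall j, 0 <= f j) -> (m <= n)%nat ->
  sum_f_R0 f m <= sum_f_R0 f n.
Proof. intros Hf Hmn. induction Hmn; [lra|]. simpl. specialize (Hf (S m0)). lra. Qed.

Lemma pgf_tail_bound (a : nat -> R) x l k : (forall j, 0 <= a j) -> (forall N, sum_f_R0 a N <= 1) ->
  0 <= x <= 1 -> is_series (fun j => a j * x ^ j) l ->
  0 <= l - sum_f_R0 (fun j => a j * x ^ j) k <= x ^ S k.
Proof.
  intros Ha H1 Hx Hl.
  assert (Hb0 : forall j, 0 <= a j * x ^ j) by (intro j; apply Rmult_le_pos; auto; apply pow_le; lra).
  set (A := fun N => sum_f_R0 (fun j => a j * x ^ j) N).
  assert (Hxk : 0 <= x ^ S k) by (apply pow_le; lra).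
  split; [pose proof (partial_sum_le_series _ _ Hb0 Hl k); unfold A in *; lra|].
  assert (C : forall N, A N <= A k + x ^ S k * sum_f_R0 a N).
  { intro N. assert (0 <= x ^ S k * sum_f_R0 a N) by (apply Rmult_le_pos; [lra|apply cond_pos_sum; auto]).
    induction N.
    - assert (A 0%nat <= A k) by (apply partial_sum_mono; auto; lia). lra.
    - destruct (le_lt_dec (S N) k).
      + assert (A (S N) <= A k) by (apply partial_sum_mono; auto). lra.
      + unfold A in *. rewrite !tech5.
        assert (0 <= x ^ S k * sum_f_R0 a N) by (apply Rmult_le_pos; [lra|apply cond_pos_sum; auto]).
        specialize (IHN H0).
        assert (x ^ S N <= x ^ S k) by (apply pow_le_anti; [lra|lia]).
        assert (a (S N) * x ^ S N <= x ^ S k * a (S N))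
          by (rewrite Rmult_comm; apply Rmult_le_compat_r; auto).
        lra. }
  assert (l <= A k + x ^ S k); [|unfold A in *; lra].
  apply (series_le_of_partial_bound _ _ _ Hl). intro N. specialize (C N). specialize (H1 N).
  assert (x ^ S k * sum_f_R0 a N <= x ^ S k) by (rewrite <- (Rmult_1_r (x ^ S k)) at 2; apply Rmult_le_compat_l; auto).
  unfold A in *. lra.
Qed.

Lemma coef_diff_bound (p q : nat -> R) P Q x k :
  (forall j, 0 <= p j) -> (forall N, sum_f_R0 p N <= 1) ->
  (forall j, 0 <= q j) -> (forall N, sum_f_R0 q N <= 1) -> 0 <= x <= 1 ->
  is_series (fun j => p j * x ^ j) P -> is_series (fun j => q j * x ^ j) Q ->
  Rabs (p k - q k) * x ^ k
    <= Rabs (P - Q) + x ^ S k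
       + Rabs (sum_f_R0 (fun j => (p j - q j) * x ^ j) k - (p k - q k) * x ^ k).
Proof.
  intros Hp0 Hp1 Hq0 Hq1 Hx HP HQ.
  pose proof (pgf_tail_bound p x P k Hp0 Hp1 Hx HP) as T1.
  pose proof (pgf_tail_bound q x Q k Hq0 Hq1 Hx HQ) as T2.
  set (d := fun j => (p j - q j) * x ^ j).
  assert (E : sum_f_R0 d k = sum_f_R0 (fun j => p j * x ^ j) k - sum_f_R0 (fun j => q j * x ^ j) k).
  { rewrite <- minus_sum. apply sum_eq. intros. unfold d. ring. }
  assert (Hid : d k = (P - Q) - ((P - sum_f_R0 (fun j => p j * x ^ j) k)
                                 - (Q - sum_f_R0 (fun j => q j * x ^ j) k))
                      - (sum_f_R0 d k - d k)) by (rewrite E; ring).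
  assert (Hdk : Rabs (d k) <= Rabs (P - Q) + x ^ S k + Rabs (sum_f_R0 d k - d k)).
  { rewrite Hid at 1.
    unfold Rminus at 1. eapply Rle_trans; [apply Rabs_triang|]. rewrite Rabs_Ropp.
    unfold Rminus at 1. apply Rplus_le_compat; [|lra].
    eapply Rle_trans; [apply Rabs_triang|]. rewrite Rabs_Ropp.
    apply Rplus_le_compat; [lra|]. apply Rabs_le. lra. }
  unfold d in Hdk. rewrite Rabs_mult, (Rabs_pos_eq (x ^ k)) in Hdk by (apply pow_le; lra).
  exact Hdk.
Qed.

Lemma sum_below_cv (d : nat -> nat -> R) k : (forall j, (j < k)%nat -> Un_cv (fun n => d n j) 0) ->
  Un_cv (fun n => sum_f_R0 (d n) k - d n k) 0.
Proof.
  induction k; intro H.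
  - apply Un_cv_eventually_eq with (fun _ => 0) O; [intros n _; simpl; ring|apply Un_cv_const].
  - apply Un_cv_eventually_eq with (fun n => (sum_f_R0 (d n) k - d n k) + d n k) O.
    + intros n _. rewrite tech5. ring.
    + replace 0 with (0 + 0) by ring. apply CV_plus; [apply IHk; intros; apply H; lia|apply H; lia].
Qed.

(* Pointwise convergence on (0,1) of the generating functions of sub-probability
   sequences implies convergence of every coefficient (induction on k, choosing x small). *)
Lemma pgf_continuity_theorem (p : nat -> nat -> R) (q : nat -> R) (P : nat -> R -> R) (Q : R -> R) :
  (forall n k, 0 <= p n k) -> (forall n N, sum_f_R0 (p n) N <= 1) ->
  (forall k, 0 <= q k) -> (forall N, sum_f_R0 q N <= 1) ->
  (forall n x, 0 < x < 1 -> is_series (fun k => p n k * x ^ k) (P n x)) ->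
  (forall x, 0 < x < 1 -> is_series (fun k => q k * x ^ k) (Q x)) ->
  (forall x, 0 < x < 1 -> Un_cv (fun n => P n x) (Q x)) ->
  forall k, Un_cv (fun n => p n k) (q k).
Proof.
  intros Hp0 Hp1 Hq0 Hq1 HP HQ HPQ k.
  induction k as [k IH] using lt_wf_ind.
  intros eps Heps.
  set (x := Rmin (1 / 2) (eps / 8)).
  assert (Hx : 0 < x < 1) by (unfold x; split; [apply Rmin_glb_lt|pose proof (Rmin_l (1/2) (eps/8))]; lra).
  assert (Hx8 : x <= eps / 8) by apply Rmin_r.
  set (d := fun n j => (p n j - q j) * x ^ j).
  assert (Hd : forall j, (j < k)%nat -> Un_cv (fun n => d n j) 0).
  { intros j Hj. unfold d. replace 0 with ((q j - q j) * x ^ j) by ring.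
    apply CV_mult; [apply CV_minus; [apply IH; auto|apply Un_cv_const]|apply Un_cv_const]. }
  assert (Hxk : 0 < x ^ k) by (apply pow_lt; lra).
  set (eta := eps * x ^ k / 4).
  assert (Heta : 0 < eta) by (unfold eta; apply Rmult_lt_0_compat; [apply Rmult_lt_0_compat|]; lra).
  destruct (HPQ x Hx eta Heta) as [N1 HN1].
  destruct (sum_below_cv d k Hd eta Heta) as [N2 HN2].
  exists (max N1 N2). intros n Hn.
  specialize (HN1 n ltac:(lia)). specialize (HN2 n ltac:(lia)). unfold R_dist in *.
  rewrite Rminus_0_r in HN2.
  pose proof (coef_diff_bound (p n) q (P n x) (Q x) x k (Hp0 n) (Hp1 n) Hq0 Hq1
                ltac:(lra) (HP n x Hx) (HQ x Hx)) as Hc.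
  assert (Hsk : x ^ S k <= eps / 8 * x ^ k) by (simpl; apply Rmult_le_compat_r; lra).
  apply Rmult_lt_reg_r with (x ^ k); auto.
  unfold eta, d in *. lra.
Qed.

(** * The compound Poisson law CP(mu) *)

Lemma exp_series y : is_series (fun m => / INR (fact m) * y ^ m) (exp y).
Proof. apply is_series_Reals. unfold exp. destruct (exist_exp y) as [l Hl]. simpl. exact Hl. Qed.

(* Total mass lambda = M(1) of mu. *)
Definition mu_mass : R := PSeries mu_coef 1.

(* CP(mu) as a Poisson(lambda) mixture of convolution powers of mu:
   q k = sum_m e^(-lambda) / m! * mu^{*m}(k). *)
Definition cp_pmf (k : nat) : R :=
  Series (fun m => exp (- mu_mass) / INR (fact m) * convpow mu_coef m k).

Lemma mu_coef_pgf x : 0 <= x <= 1 -> is_series (fun j => mu_coef j * x ^ j) (PSeries mu_coef x).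
Proof.
  intro Hx. apply is_pseries_series, PSeries_correct, CV_radius_inside, mu_coef_radius.
  rewrite Rabs_pos_eq; lra.
Qed.

(* The generating function of cp_pmf is exp(M(x) - lambda) (Tonelli on the mixture). *)
Lemma cp_pmf_spec x : 0 <= x <= 1 ->
  (forall k, ex_series (fun m => exp (- mu_mass) / INR (fact m) * convpow mu_coef m k * x ^ k)) /\
  is_series (fun k => cp_pmf k * x ^ k) (exp (PSeries mu_coef x - mu_mass)).
Proof.
  intro Hx.
  assert (Hc : forall m, 0 <= exp (- mu_mass) / INR (fact m)).
  { intro m. apply Rmult_le_pos; [left; apply exp_pos|].
    left; apply Rinv_0_lt_compat, lt_0_INR, lt_O_fact. }
  set (M := PSeries mu_coef x).
  assert (Hrow : forall m, is_series (fun k => exp (- mu_mass) / INR (fact m) * convpow mu_coef m k * x ^ k)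
                                     (exp (- mu_mass) / INR (fact m) * M ^ m)).
  { intro m. pose proof (convpow_pgf mu_coef M x mu_coef_nonneg ltac:(lra) (mu_coef_pgf x Hx) m) as H.
    apply (is_series_scal_l (V:=R_NormedModule) (exp (- mu_mass) / INR (fact m))) in H.
    eapply is_series_ext; [|apply H]. intro k. unfold scal; simpl; unfold mult; simpl. rring. }
  assert (Hsum : is_series (fun m => exp (- mu_mass) / INR (fact m) * M ^ m) (exp (M - mu_mass))).
  { pose proof (exp_series M) as H.
    apply (is_series_scal_l (V:=R_NormedModule) (exp (- mu_mass))) in H.
    unfold Rminus. rewrite exp_plus, Rmult_comm.
    eapply is_series_ext; [|apply H]. intro m. unfold scal; simpl; unfold mult; simpl. unfold Rdiv. rring. }
  destruct (tonelli _ _ _ (fun m k => Rmult_le_pos _ _ (Rmult_le_pos _ _ (Hc m)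
              (convpow_nonneg mu_coef mu_coef_nonneg m k)) (pow_le _ k (proj1 Hx))) Hrow Hsum)
    as [Hex HT].
  split; auto.
  eapply is_series_ext; [|apply HT]. intro k. cbv beta. unfold cp_pmf.
  rewrite <- Series_scal_r. reflexivity.
Qed.

Lemma cp_pmf_nonneg k : 0 <= cp_pmf k.
Proof.
  destruct (cp_pmf_spec 1 ltac:(lra)) as [Hex _].
  assert (Hex' : ex_series (fun m => exp (- mu_mass) / INR (fact m) * convpow mu_coef m k)).
  { eapply ex_series_ext; [|apply (Hex k)]. intro m. cbv beta. rewrite pow1. apply Rmult_1_r. }
  unfold cp_pmf. apply (series_nonneg (fun m => exp (- mu_mass) / INR (fact m) * convpow mu_coef m k));
    [|apply Series_correct; auto].
  intro m. apply Rmult_le_pos; [apply Rmult_le_pos|apply convpow_nonneg, mu_coef_nonneg].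
  - left; apply exp_pos.
  - left; apply Rinv_0_lt_compat, lt_0_INR, lt_O_fact.
Qed.

Lemma cp_pmf_sum : is_series cp_pmf 1.
Proof.
  destruct (cp_pmf_spec 1 ltac:(lra)) as [_ H]. unfold mu_mass in H.
  rewrite Rminus_diag_eq, exp_0 in H by auto.
  eapply is_series_ext; [|apply H]. intro k. cbv beta. rewrite pow1. apply Rmult_1_r.
Qed.

Lemma cp_pmf_is_CP : is_CP_mu cp_pmf.
Proof.
  split; [split; [apply cp_pmf_nonneg|apply is_series_Reals, cp_pmf_sum]|].
  intros x Hx. exists (PSeries mu_coef x - mu_mass). split.
  - apply is_series_Reals. unfold mu_mass.
    eapply is_series_ext;
      [|apply (is_series_minus (V:=R_NormedModule)); apply mu_coef_series;
        [rewrite Rabs_pos_eq; lra|rewrite Rabs_R1; lra]].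
    intro n. cbv beta. rewrite pow1. unfold plus, opp; simpl. ring.
  - apply is_series_Reals, cp_pmf_spec; auto.
Qed.

Lemma bpi_conv_dist (g e L : nat -> nat -> R) :
  (forall n, (1 <= n)%nat -> is_pmf (g n)) ->
  (forall n, (1 <= n)%nat -> infinite_sum (fun k => INR k * g n k) (rho n)) ->
  (exists (N : nat) (s : nat -> R),
     (forall n, (N <= n)%nat -> infinite_sum (fun k => INR k * (INR k - 1) * g n k) (s n)) /\
     Un_cv (fun n => s n * INR n) 0) ->
  (forall n, (1 <= n)%nat -> is_pmf (e n) /\ has_pgf (e n) (Hn n)) ->
  bpi_laws g e L ->
  exists q : nat -> R, is_CP_mu q /\ conv_dist L q.
Proof.
  intros Hg Hm [N [s [HsN Hs]]] He HL.
  exists cp_pmf. split; [apply cp_pmf_is_CP|].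
  pose proof (bpi_law_pgf g e L Hg He HL) as HLp.
  intro k.
  apply (pgf_continuity_theorem L cp_pmf (law_pgf g) (fun x => exp (PSeries mu_coef x - mu_mass))).
  - intros n j. apply HLp.
  - intros n M. destruct (HLp n) as [H0 H1]. specialize (H1 1 ltac:(lra)).
    assert (H1' : is_series (L n) (law_pgf g n 1)).
    { eapply is_series_ext; [|apply H1]. intro j. cbv beta. rewrite pow1. apply Rmult_1_r. }
    pose proof (partial_sum_le_series _ _ H0 H1' M). pose proof (law_pgf_range g n 1 Hg ltac:(lra)). lra.
  - apply cp_pmf_nonneg.
  - intro M. apply (partial_sum_le_series _ _ cp_pmf_nonneg cp_pmf_sum M).
  - intros n x Hx. apply HLp. lra.
  - intros x Hx. apply cp_pmf_spec. lra.
  - intros x Hx. unfold mu_mass. rewrite <- dilog_mu_identity by auto.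
    apply (law_pgf_lim g N s x); auto.
Qed.

Theorem mainTheorem9 :
  (* H_n is a probability generating function *)
  (forall n : nat, (1 <= n)%nat -> is_pgf (Hn n)) /\
  (* lim_n H_n^(k)(1) / (k (1 - rho_n)) = (k-1)!/k, for every k >= 1 *)
  (forall k : nat, (1 <= k)%nat ->
     exists d : nat -> R -> R,
       (forall n : nat, (1 <= n)%nat -> nth_deriv (fun x => 0 < x < 2) k (Hn n) (d n)) /\
       Un_cv (fun m => d (S m) 1 / (INR k * (1 - rho (S m))))
             (INR (fact (k - 1)) / INR k)) /\
  (* convergence in distribution of X_n to CP(mu) *)
  (forall (g e L : nat -> nat -> R),
     (forall n, (1 <= n)%nat -> is_pmf (g n)) ->
     (forall n, (1 <= n)%nat -> infinite_sum (fun k => INR k * g n k) (rho n)) ->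
     (exists (N : nat) (s : nat -> R),
        (forall n, (N <= n)%nat ->
           infinite_sum (fun k => INR k * (INR k - 1) * g n k) (s n)) /\
        Un_cv (fun n => s n * INR n) 0) ->
     (forall n, (1 <= n)%nat -> is_pmf (e n) /\ has_pgf (e n) (Hn n)) ->
     bpi_laws g e L ->
     exists q : nat -> R, is_CP_mu q /\ conv_dist L q) /\
  (* the identity of generating exponents on (0,1) *)
  (forall x : R, 0 < x < 1 ->
     exists s0 : R,
       infinite_sum (fun l => (x - 1) ^ (S l) / (INR (S l)) ^ 2) s0 /\
       infinite_sum (fun j => mu (S j) * (x ^ (S j) - 1)) s0).
Proof.
  split; [exact Hn_is_pgf|]. split; [|split; [exact bpi_conv_dist|exact exponent_identity]].
  intros k Hk. exists (fun n => Hn_deriv n k). split.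
  - intros n Hn1. apply Hn_nth_deriv; auto.
  - eapply Un_cv_eventually_eq with (fun _ => INR (fact (k - 1)) / INR k) O; [|apply Un_cv_const].
    intros m _. symmetry. apply Hn_deriv_normalized; auto.
Qed.
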